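(* Let $\varphi$ be a rational self-map of $\mathbb{D}$ having order of contact $n$ (an even positive integer) with $\partial\mathbb{D}$ at $\zeta\in\partial\mathbb{D}$, let $\lambda=\varphi(\zeta)$, and let $\sigma$ be a branch of $\varphi_e^{-1}$ defined on a neighborhood of $\lambda$ with $\sigma(\lambda)=\zeta$. Then $$D_n(\sigma\circ\varphi,\zeta)=\Big(\zeta,1,0,\dots,0,\frac{c}{\varphi'(\zeta)}\Big),\qquad D_n(\varphi\circ\sigma,\lambda)=\Big(\lambda,1,0,\dots,0,\frac{c}{\varphi'(\zeta)^n}\Big),$$ where $c=\varphi^{(n)}(\zeta)-\varphi_e^{(n)}(\zeta)\neq0$.
   Context: $\varphi_e=\rho\circ\varphi\circ\rho$ with $\rho(z)=1/\bar z$ (so $\varphi_e$ is analytic near $\zeta$ and $\varphi_e(\zeta)=\lambda$). For $h$ analytic at $z$, $D_n(h,z)=(h(z),h'(z),\dots,h^{(n)}(z))$. Order of contact $n$ at $\zeta$: $\varphi(\zeta)\in\partial\mathbb{D}$ and $\frac{1-|\varphi(e^{i\theta})|^2}{|\varphi(\zeta)-\varphi(e^{i\theta})|^n}$ is bounded above and away from zero as $e^{i\theta}\to\zeta$. *)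

From Stdlib Require Import Reals Lra List Arith.
Open Scope R_scope.

Record Cx := mkC { Cre : R; Cim : R }.

Definition C0 : Cx := mkC 0 0.
Definition C1 : Cx := mkC 1 0.
Definition RtoC (x : R) : Cx := mkC x 0.
Definition Cadd (z w : Cx) : Cx := mkC (Cre z + Cre w) (Cim z + Cim w).
Definition Copp (z : Cx) : Cx := mkC (- Cre z) (- Cim z).
Definition Csub (z w : Cx) : Cx := Cadd z (Copp w).
Definition Cmul (z w : Cx) : Cx :=
  mkC (Cre z * Cre w - Cim z * Cim w) (Cre z * Cim w + Cim z * Cre w).
(* total inverse; Cinv C0 is junk (= C0 up to Rinv 0) and never used *)
Definition Cinv (z : Cx) : Cx :=
  let d := Cre z * Cre z + Cim z * Cim z in mkC (Cre z / d) (- Cim z / d).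
Definition Cdiv (z w : Cx) : Cx := Cmul z (Cinv w).
Definition Cconj (z : Cx) : Cx := mkC (Cre z) (- Cim z).
Definition Cnorm (z : Cx) : R := sqrt (Cre z * Cre z + Cim z * Cim z).
Fixpoint Cpow (z : Cx) (n : nat) : Cx :=
  match n with O => C1 | S m => Cmul z (Cpow z m) end.

(* evaluation of a polynomial given by its coefficient list a0 :: a1 :: ... *)
Fixpoint peval (p : list Cx) (z : Cx) : Cx :=
  match p with nil => C0 | a :: p' => Cadd a (Cmul z (peval p' z)) end.

Definition ratfun (p q : list Cx) : Cx -> Cx := fun z => Cdiv (peval p z) (peval q z).

(* rho(z) = 1 / conj z, and the reflected map phi_e = rho o phi o rho *)
Definition rho (z : Cx) : Cx := Cinv (Cconj z).
Definition reflect_map (phi : Cx -> Cx) : Cx -> Cx := fun z => rho (phi (rho z)).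

Definition Cderiv_at (f : Cx -> Cx) (z l : Cx) : Prop :=
  forall eps, 0 < eps -> exists delta, 0 < delta /\
    forall h, 0 < Cnorm h < delta ->
      Cnorm (Csub (Cdiv (Csub (f (Cadd z h)) (f z)) h) l) < eps.

Definition derivs_on (f : Cx -> Cx) (z : Cx) (r : R) (g : nat -> Cx -> Cx) (n : nat)
  : Prop :=
  0 < r /\
  (forall w, Cnorm (Csub w z) < r -> g O w = f w) /\
  (forall k w, (k < n)%nat -> Cnorm (Csub w z) < r ->
     Cderiv_at (g k) w (g (S k) w)).

(* has_jet f z n d  :<->  f is n times complex differentiable near z and
   D_n(f,z) = (d 0, d 1, ..., d n), i.e. f^(k)(z) = d k for k <= n *)
Definition has_jet (f : Cx -> Cx) (z : Cx) (n : nat) (d : nat -> Cx) : Prop :=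
  exists r g, derivs_on f z r g n /\ forall k, (k <= n)%nat -> g k z = d k.

Definition holo_on_disc (f : Cx -> Cx) (z : Cx) (r : R) : Prop :=
  forall w, Cnorm (Csub w z) < r -> exists l, Cderiv_at f w l.

Definition rational_selfmap (p q : list Cx) : Prop :=
  (forall z, Cnorm z <= 1 -> peval q z <> C0) /\
  (forall z, Cnorm z < 1 -> Cnorm (ratfun p q z) < 1).

Definition order_of_contact (phi : Cx -> Cx) (zeta : Cx) (n : nat) : Prop :=
  Cnorm zeta = 1 /\ Cnorm (phi zeta) = 1 /\
  exists eps m M, 0 < eps /\ 0 < m /\
    forall w, Cnorm w = 1 -> 0 < Cnorm (Csub w zeta) < eps ->
      phi w <> phi zeta /\
      m <= (1 - Cnorm (phi w) ^ 2) / (Cnorm (Csub (phi zeta) (phi w))) ^ n <= M.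

Definition jet_form (z0 last : Cx) (n : nat) : nat -> Cx :=
  fun k => match k with
           | O => z0
           | S O => C1
           | _ => if Nat.eqb k n then last else C0
           end.

From Stdlib Require Import Reals List Arith Lra Lia.
Open Scope R_scope.

(* Write lambda = phi zeta and d1 = phi'(zeta).  First, d1 <> 0: factoring
   phi - lambda = (z - zeta)^k g with g zeta <> 0, an exponent k >= 2 is impossible,
   because moving from zeta into the disc in a suitable direction would push |phi|
   above 1.  Second, on the unit circle rho is the identity, so there
   phi_e(w) - phi(w) = (1 - |phi(w)|^2) / conj phi(w); by the order-of-contact
   hypothesis this is comparable to |w - zeta|^n.  Comparing with the Taylor
   expansions (Peano remainder), the jets of phi and phi_e agree below order n and
   differ at order n, i.e. c <> 0.  Third, phi_e o sigma = id and the strict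
   differentiability of phi_e at zeta let one solve for sigma o phi and phi o sigma
   up to o(|h|^n): with K = -c/n!, sigma(phi(zeta + h)) = zeta + h - (K/d1) h^n + o(|h|^n)
   and phi(sigma(lambda + h)) = lambda + h - (K/d1^n) h^n + o(|h|^n).  By uniqueness of
   Taylor coefficients these are the claimed jets. *)

(** * Complex numbers *)

Lemma Cx_eq : forall z w : Cx, Cre z = Cre w -> Cim z = Cim w -> z = w.
Proof. intros [a b] [c d]; simpl; intros; subst; reflexivity. Qed.

Ltac Cunf := unfold Csub, Cadd, Copp, Cmul, C0, C1, RtoC, Cconj, Cdiv in *.

Ltac cring := apply Cx_eq; Cunf; simpl; ring.

Lemma Ceq_dec (a b : Cx) : {a = b} + {a <> b}.
Proof. decide equality; apply Req_EM_T. Qed.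

Definition Cnorm2 (z : Cx) := Cre z * Cre z + Cim z * Cim z.

Lemma Cnorm2_ge0 z : 0 <= Cnorm2 z.
Proof. unfold Cnorm2; nra. Qed.

Lemma Cnorm_ge0 z : 0 <= Cnorm z.
Proof. apply sqrt_pos. Qed.

Lemma Cnorm_sq z : Cnorm z * Cnorm z = Cnorm2 z.
Proof. apply sqrt_sqrt, Cnorm2_ge0. Qed.

Lemma Cnorm_le_sq z a : 0 <= a -> Cnorm2 z <= a * a -> Cnorm z <= a.
Proof. intros Ha H. unfold Cnorm. rewrite <- (sqrt_square a Ha). apply sqrt_le_1_alt. exact H. Qed.

Lemma Cnorm_eq_sq z w : Cnorm2 z = Cnorm2 w -> Cnorm z = Cnorm w.
Proof. intros H; unfold Cnorm; change (sqrt (Cnorm2 z) = sqrt (Cnorm2 w)); rewrite H; reflexivity. Qed.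

Lemma Cnorm2_mul z w : Cnorm2 (Cmul z w) = Cnorm2 z * Cnorm2 w.
Proof. unfold Cnorm2, Cmul; simpl; ring. Qed.

Lemma Cnorm_mul z w : Cnorm (Cmul z w) = Cnorm z * Cnorm w.
Proof.
  unfold Cnorm; change (sqrt (Cnorm2 (Cmul z w)) = sqrt (Cnorm2 z) * sqrt (Cnorm2 w)).
  rewrite Cnorm2_mul. apply sqrt_mult; apply Cnorm2_ge0.
Qed.

Lemma Cnorm_triangle z w : Cnorm (Cadd z w) <= Cnorm z + Cnorm w.
Proof.
  apply Cnorm_le_sq. pose proof (Cnorm_ge0 z); pose proof (Cnorm_ge0 w); lra.
  pose proof (Cnorm_sq z) as Hz; pose proof (Cnorm_sq w) as Hw.
  pose proof (Cnorm_ge0 z); pose proof (Cnorm_ge0 w).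
  assert (HC : (Cre z * Cre w + Cim z * Cim w) <= Cnorm z * Cnorm w).
  { assert (Hl : (Cre z * Cre w + Cim z * Cim w) * (Cre z * Cre w + Cim z * Cim w)
       <= (Cnorm z * Cnorm w) * (Cnorm z * Cnorm w)).
    { replace ((Cnorm z * Cnorm w) * (Cnorm z * Cnorm w)) with (Cnorm2 z * Cnorm2 w)
        by (rewrite <- Hz, <- Hw; ring).
      unfold Cnorm2. pose proof (Rle_0_sqr (Cre z * Cim w - Cim z * Cre w)). unfold Rsqr in *. nra. }
    destruct (Rle_dec (Cre z * Cre w + Cim z * Cim w) 0). nra.
    assert (0 <= Cnorm z * Cnorm w) by nra. nra. }
  unfold Cnorm2 in *; simpl. nra.
Qed.

Lemma Cnorm_opp z : Cnorm (Copp z) = Cnorm z.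
Proof. apply Cnorm_eq_sq. unfold Cnorm2, Copp; simpl; ring. Qed.

Lemma Cnorm_sub_sym z w : Cnorm (Csub z w) = Cnorm (Csub w z).
Proof. apply Cnorm_eq_sq. unfold Cnorm2; Cunf; simpl; ring. Qed.

Lemma Cnorm_sub_triangle z w : Cnorm (Csub z w) <= Cnorm z + Cnorm w.
Proof. unfold Csub. rewrite <- (Cnorm_opp w). apply Cnorm_triangle. Qed.

Lemma Cnorm_rev_triangle z w : Cnorm z - Cnorm w <= Cnorm (Csub z w).
Proof.
  assert (z = Cadd (Csub z w) w) as E by cring.
  pose proof (Cnorm_triangle (Csub z w) w). rewrite <- E in H. lra.
Qed.

Lemma Cnorm2_eq0 z : Cnorm2 z = 0 -> z = C0.
Proof. unfold Cnorm2; intros H. apply Cx_eq; unfold C0; simpl; nra. Qed.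

Lemma Cnorm_eq0 z : Cnorm z = 0 -> z = C0.
Proof. intros H. apply Cnorm2_eq0. rewrite <- Cnorm_sq, H. ring. Qed.

Lemma Cnorm_pos z : z <> C0 -> 0 < Cnorm z.
Proof. intros H. destruct (Cnorm_ge0 z); auto. exfalso; apply H, Cnorm_eq0; auto. Qed.

Lemma Cnorm_C0 : Cnorm C0 = 0.
Proof. unfold Cnorm, C0; simpl. replace (0*0+0*0) with 0 by ring; apply sqrt_0. Qed.

Lemma Cnorm_C1 : Cnorm C1 = 1.
Proof. unfold Cnorm, C1; simpl. replace (1*1+0*0) with 1 by ring; apply sqrt_1. Qed.

Lemma Cnorm2_pos z : z <> C0 -> 0 < Cnorm2 z.
Proof. intros H; rewrite <- Cnorm_sq; pose proof (Cnorm_pos z H); nra. Qed.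

Lemma Cnorm_RtoC x : Cnorm (RtoC x) = Rabs x.
Proof. unfold Cnorm, RtoC; simpl. rewrite <- sqrt_Rsqr_abs. f_equal. unfold Rsqr; ring. Qed.

Lemma Cre_le z : Rabs (Cre z) <= Cnorm z.
Proof. rewrite <- sqrt_Rsqr_abs. apply sqrt_le_1_alt. unfold Rsqr, Cnorm2. nra. Qed.

Lemma Cnorm_le_re_im z : Cnorm z <= Rabs (Cre z) + Rabs (Cim z).
Proof.
  apply Cnorm_le_sq. pose proof (Rabs_pos (Cre z)); pose proof (Rabs_pos (Cim z)); lra.
  pose proof (Rabs_pos (Cre z)); pose proof (Rabs_pos (Cim z)).
  assert (Rabs (Cre z) * Rabs (Cre z) = Cre z * Cre z) by (rewrite <- Rabs_mult; apply Rabs_pos_eq; nra).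
  assert (Rabs (Cim z) * Rabs (Cim z) = Cim z * Cim z) by (rewrite <- Rabs_mult; apply Rabs_pos_eq; nra).
  unfold Cnorm2. nra.
Qed.

Lemma Cnorm_conj a : Cnorm (Cconj a) = Cnorm a.
Proof. apply Cnorm_eq_sq. unfold Cnorm2, Cconj; simpl; ring. Qed.

Lemma Cnorm_pow2 a : Cnorm a ^ 2 = Cnorm2 a.
Proof. rewrite <- Cnorm_sq. ring. Qed.

Lemma Cnorm2_add a b : Cnorm2 (Cadd a b) = Cnorm2 a + 2 * Cre (Cmul (Cconj a) b) + Cnorm2 b.
Proof. unfold Cnorm2, Cadd, Cmul, Cconj; simpl; ring. Qed.

Lemma Cnorm2_1_Cnorm a : Cnorm2 a = 1 -> Cnorm a = 1.
Proof. intros H. unfold Cnorm. change (sqrt (Cnorm2 a) = 1). rewrite H. apply sqrt_1. Qed.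

Lemma Cnorm1_Cnorm2 a : Cnorm a = 1 -> Cnorm2 a = 1.
Proof. intros H. rewrite <- Cnorm_sq, H. ring. Qed.

Lemma Cnorm2_lt1 a : Cnorm2 a < 1 -> Cnorm a < 1.
Proof.
  intros H. unfold Cnorm. change (sqrt (Cnorm2 a) < 1). rewrite <- sqrt_1.
  apply sqrt_lt_1_alt. split; auto. apply Cnorm2_ge0.
Qed.

Lemma Cnorm_lt1 a : Cnorm a < 1 -> Cnorm2 a < 1.
Proof. intros H. rewrite <- Cnorm_sq. pose proof (Cnorm_ge0 a). nra. Qed.

Lemma Cnorm2_1_neq0 a : Cnorm2 a = 1 -> a <> C0.
Proof. intros H E. rewrite E in H. unfold Cnorm2, C0 in H; simpl in H. lra. Qed.

Lemma Cinv_l z : z <> C0 -> Cmul (Cinv z) z = C1.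
Proof.
  intros H. pose proof (Cnorm2_pos z H). unfold Cnorm2 in *. apply Cx_eq; unfold Cinv, Cmul, C1; simpl; field; lra.
Qed.

Lemma Cinv_r z : z <> C0 -> Cmul z (Cinv z) = C1.
Proof.
  intros H. pose proof (Cnorm2_pos z H). unfold Cnorm2 in *. apply Cx_eq; unfold Cinv, Cmul, C1; simpl; field; lra.
Qed.

Lemma Cnorm2_Cinv z : z <> C0 -> Cnorm2 (Cinv z) = / Cnorm2 z.
Proof. intros H. pose proof (Cnorm2_pos z H). unfold Cnorm2 in *; unfold Cinv; simpl. field. lra. Qed.

Lemma Cnorm_Cinv z : z <> C0 -> Cnorm (Cinv z) = / Cnorm z.
Proof.
  intros H. unfold Cnorm; change (sqrt (Cnorm2 (Cinv z)) = / sqrt (Cnorm2 z)).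
  rewrite Cnorm2_Cinv by auto. apply sqrt_inv.
Qed.

Lemma Cinv_neq0 z : z <> C0 -> Cinv z <> C0.
Proof. intros H E. pose proof (Cinv_l z H). rewrite E in H0. unfold Cmul, C0, C1 in H0. injection H0. lra. Qed.

Lemma Cmul_neq0 z w : z <> C0 -> w <> C0 -> Cmul z w <> C0.
Proof. intros H1 H2 E. pose proof (Cnorm2_pos z H1); pose proof (Cnorm2_pos w H2).
  pose proof (Cnorm2_mul z w). rewrite E in H3. assert (Cnorm2 C0 = 0) by (unfold Cnorm2, C0; simpl; ring). nra. Qed.

Lemma C1_neq0 : C1 <> C0.
Proof. unfold C1, C0; intro H; injection H; lra. Qed.

Lemma Cpow_neq0 z n : z <> C0 -> Cpow z n <> C0.
Proof. intros H; induction n; simpl. apply C1_neq0. apply Cmul_neq0; auto. Qed.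

Lemma Cnorm_pow z n : Cnorm (Cpow z n) = Cnorm z ^ n.
Proof. induction n; simpl. apply Cnorm_C1. rewrite Cnorm_mul, IHn; ring. Qed.

Lemma Cmul_inv_cancel a b : b <> C0 -> Cmul (Cmul a b) (Cinv b) = a.
Proof. intros H. pose proof (Cinv_r b H). transitivity (Cmul a (Cmul b (Cinv b))). cring. rewrite H0; cring. Qed.

Lemma Cinv_mul a b : a <> C0 -> b <> C0 -> Cinv (Cmul a b) = Cmul (Cinv a) (Cinv b).
Proof.
  intros Ha Hb. pose proof (Cnorm2_pos a Ha); pose proof (Cnorm2_pos b Hb). unfold Cnorm2 in *.
  apply Cx_eq; unfold Cinv, Cmul; simpl; field; split; nra.
Qed.

Lemma Cinv_pow a n : a <> C0 -> Cinv (Cpow a n) = Cpow (Cinv a) n.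
Proof.
  intros Ha; induction n; simpl.
  apply Cx_eq; unfold Cinv, C1; simpl; field.
  rewrite Cinv_mul, IHn; auto. apply Cpow_neq0; auto.
Qed.

Lemma Cpow_mul a b k : Cpow (Cmul a b) k = Cmul (Cpow a k) (Cpow b k).
Proof. induction k; simpl. cring. rewrite IHk. cring. Qed.

Lemma Cpow_RtoC t k : Cpow (RtoC t) k = RtoC (t ^ k).
Proof. induction k; simpl. reflexivity. rewrite IHk. cring. Qed.

Lemma Csub_diag a : Csub a a = C0.
Proof. cring. Qed.

Lemma Cmul_RtoC_eq0 a x : x <> 0 -> Cmul a (RtoC x) = C0 -> a = C0.
Proof.
  intros Hx H. unfold Cmul, RtoC, C0 in H; simpl in H. injection H; intros Him Hre.
  apply Cx_eq; simpl; apply (Rmult_eq_reg_r x); auto; lra.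
Qed.

Lemma Csub_eq0 a b : Csub a b = C0 -> a = b.
Proof. intros H. apply Cx_eq; unfold Csub, Cadd, Copp, C0 in H; injection H; lra. Qed.

Lemma Cpow_sub_bound a b k M : Cnorm a <= M -> Cnorm b <= M ->
  Cnorm (Csub (Cpow a (S k)) (Cpow b (S k))) <= INR (S k) * M ^ k * Cnorm (Csub a b).
Proof.
  intros Ha Hb. pose proof (Cnorm_ge0 a). assert (0 <= M) by lra.
  induction k.
  - simpl. replace (Csub (Cmul a C1) (Cmul b C1)) with (Csub a b) by cring. lra.
  - replace (Csub (Cpow a (S (S k))) (Cpow b (S (S k)))) with
      (Cadd (Cmul a (Csub (Cpow a (S k)) (Cpow b (S k)))) (Cmul (Cpow b (S k)) (Csub a b))) by (simpl; cring).
    eapply Rle_trans. apply Cnorm_triangle. rewrite !Cnorm_mul, Cnorm_pow.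
    pose proof (Cnorm_ge0 (Csub (Cpow a (S k)) (Cpow b (S k)))). pose proof (Cnorm_ge0 (Csub a b)).
    pose proof (Cnorm_ge0 b).
    assert (Cnorm b ^ S k <= M ^ S k) by (apply pow_incr; lra).
    assert (Cnorm a * Cnorm (Csub (Cpow a (S k)) (Cpow b (S k))) <= M * (INR (S k) * M ^ k * Cnorm (Csub a b))).
    { apply Rmult_le_compat; auto. }
    rewrite (S_INR (S k)). simpl in *. nra.
Qed.

Definition ball (z : Cx) (r : R) (w : Cx) : Prop := Cnorm (Csub w z) < r.

Definition openset (U : Cx -> Prop) := forall w, U w -> exists r, 0 < r /\ forall v, Cnorm (Csub v w) < r -> U v.

Lemma ball_center z r : 0 < r -> ball z r z.
Proof. intros; unfold ball. replace (Csub z z) with C0 by cring. rewrite Cnorm_C0; auto. Qed.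

Lemma ball_open z r : openset (ball z r).
Proof.
  intros w Hw. unfold ball in *. exists (r - Cnorm (Csub w z)); split. lra.
  intros v Hv. replace (Csub v z) with (Cadd (Csub v w) (Csub w z)) by cring.
  eapply Rle_lt_trans. apply Cnorm_triangle. lra.
Qed.

Lemma ball_convex z d a b s : ball z d a -> ball z d b -> 0 <= s <= 1 ->
  ball z d (Cadd b (Cmul (RtoC s) (Csub a b))).
Proof.
  unfold ball. intros Ha Hb Hs.
  replace (Csub (Cadd b (Cmul (RtoC s) (Csub a b))) z) with
    (Cadd (Cmul (RtoC s) (Csub a z)) (Cmul (RtoC (1 - s)) (Csub b z))) by cring.
  eapply Rle_lt_trans. apply Cnorm_triangle. rewrite !Cnorm_mul, !Cnorm_RtoC, !Rabs_pos_eq by lra.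
  pose proof (Cnorm_ge0 (Csub a z)). pose proof (Cnorm_ge0 (Csub b z)).
  destruct (Req_dec s 0). subst. nra. nra.
Qed.

(** * Little-o estimates and complex derivatives *)

Definition littleo (E : Cx -> Cx) (k : nat) : Prop :=
  forall eps, 0 < eps -> exists delta, 0 < delta /\
    forall h, Cnorm h < delta -> Cnorm (E h) <= eps * Cnorm h ^ k.

Lemma littleo_ext E F k : (forall h, E h = F h) -> littleo E k -> littleo F k.
Proof. intros H S eps He. destruct (S eps He) as [d [Hd Hh]]. exists d; split; auto.
  intros h Hl; rewrite <- H; auto. Qed.

Lemma littleo_local E F k : (exists r, 0 < r /\ forall h, Cnorm h < r -> E h = F h) ->
  littleo E k -> littleo F k.
Proof. intros [r [Hr H]] S eps He. destruct (S eps He) as [d [Hd Hh]].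
  exists (Rmin d r); split. apply Rmin_pos; auto.
  intros h Hl. pose proof (Rmin_l d r); pose proof (Rmin_r d r).
  rewrite <- H by lra. apply Hh; lra. Qed.

Lemma littleo_add E F k : littleo E k -> littleo F k -> littleo (fun h => Cadd (E h) (F h)) k.
Proof. intros S1 S2 eps He. destruct (S1 (eps/2) ltac:(lra)) as [d1 [Hd1 H1]].
  destruct (S2 (eps/2) ltac:(lra)) as [d2 [Hd2 H2]].
  exists (Rmin d1 d2); split. apply Rmin_pos; auto.
  intros h Hl. pose proof (Rmin_l d1 d2); pose proof (Rmin_r d1 d2).
  specialize (H1 h ltac:(lra)); specialize (H2 h ltac:(lra)).
  pose proof (Cnorm_triangle (E h) (F h)). lra. Qed.

Lemma littleo_opp E k : littleo E k -> littleo (fun h => Copp (E h)) k.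
Proof. intros S eps He. destruct (S eps He) as [d [Hd H]]. exists d; split; auto.
  intros h Hl. rewrite Cnorm_opp. auto. Qed.

Lemma littleo_sub E F k : littleo E k -> littleo F k -> littleo (fun h => Csub (E h) (F h)) k.
Proof. intros S1 S2. apply littleo_add; auto. apply littleo_opp; auto. Qed.

Lemma littleo_zero k : littleo (fun _ => C0) k.
Proof. intros eps He. exists 1; split; [lra|]. intros h _. rewrite Cnorm_C0.
  pose proof (pow_le (Cnorm h) k (Cnorm_ge0 h)). nra. Qed.

Lemma littleo_mul_rel F E j m K :
  (exists r, 0 < r /\ forall h, Cnorm h < r -> Cnorm (F h) <= K * Cnorm h ^ m * Cnorm (E h)) ->
  littleo E j -> littleo F (j + m).
Proof.
  intros [r [Hr HF]] S eps He.
  set (K' := Rabs K + 1).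
  assert (HK' : 0 < K') by (unfold K'; pose proof (Rabs_pos K); lra).
  destruct (S (eps / K') ltac:(apply Rdiv_lt_0_compat; lra)) as [d [Hd HE]].
  exists (Rmin d r); split. apply Rmin_pos; auto.
  intros h Hl. pose proof (Rmin_l d r); pose proof (Rmin_r d r).
  specialize (HE h ltac:(lra)); specialize (HF h ltac:(lra)).
  rewrite pow_add.
  pose proof (pow_le (Cnorm h) j (Cnorm_ge0 h)); pose proof (pow_le (Cnorm h) m (Cnorm_ge0 h)).
  pose proof (Cnorm_ge0 (E h)).
  assert (K <= K') by (unfold K'; pose proof (Rle_abs K); lra).
  apply Rle_trans with (K' * Cnorm h ^ m * (eps / K' * Cnorm h ^ j)).
  apply Rle_trans with (K * Cnorm h ^ m * Cnorm (E h)); auto.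
  apply Rle_trans with (K' * Cnorm h ^ m * Cnorm (E h)). apply Rmult_le_compat_r; auto. apply Rmult_le_compat_r; auto.
  apply Rmult_le_compat_l; auto. nra.
  right. field. lra.
Qed.

Lemma littleo_mulO E F j m K :
  littleo E j -> (exists r, 0 < r /\ forall h, Cnorm h < r -> Cnorm (F h) <= K * Cnorm h ^ m) ->
  littleo (fun h => Cmul (F h) (E h)) (j + m).
Proof.
  intros S [r [Hr HF]]. apply littleo_mul_rel with (2 := S) (K := K).
  exists r; split; auto. intros h Hh. rewrite Cnorm_mul.
  apply Rmult_le_compat_r; auto. apply Cnorm_ge0.
Qed.

Lemma littleo_scal c E k : littleo E k -> littleo (fun h => Cmul c (E h)) k.
Proof. intros S. replace k with (k + 0)%nat by lia. apply littleo_mulO with (Cnorm c); auto.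
  exists 1; split; [lra|]. intros; simpl; lra. Qed.

Lemma littleo_pred E k : littleo E (S k) -> littleo E k.
Proof. intros S eps He. destruct (S eps He) as [d [Hd H]]. exists (Rmin d 1); split.
  apply Rmin_pos; lra. intros h Hl. pose proof (Rmin_l d 1); pose proof (Rmin_r d 1).
  specialize (H h ltac:(lra)). simpl in H.
  pose proof (pow_le (Cnorm h) k (Cnorm_ge0 h)). pose proof (Cnorm_ge0 h).
  assert (Cnorm h * Cnorm h ^ k <= Cnorm h ^ k) by nra. nra. Qed.

Lemma littleo_of_bigO E k C : (exists r, 0 < r /\ forall h, Cnorm h < r -> Cnorm (E h) <= C * Cnorm h ^ S k) ->
  littleo E k.
Proof.
  intros [r [Hr H]] eps He.
  set (C' := Rabs C + 1). assert (0 < C') by (unfold C'; pose proof (Rabs_pos C); lra).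
  exists (Rmin r (eps / C')); split. apply Rmin_pos; auto. apply Rdiv_lt_0_compat; lra.
  intros h Hl. pose proof (Rmin_l r (eps/C')); pose proof (Rmin_r r (eps/C')).
  specialize (H h ltac:(lra)). simpl in H.
  pose proof (pow_le (Cnorm h) k (Cnorm_ge0 h)). pose proof (Cnorm_ge0 h).
  assert (C <= C') by (unfold C'; pose proof (Rle_abs C); lra).
  assert (C' * Cnorm h <= eps). { apply (Rmult_le_reg_r (/C')). apply Rinv_0_lt_compat; lra.
    replace (C' * Cnorm h * / C') with (Cnorm h) by (field; lra). unfold Rdiv in *; lra. }
  apply Rle_trans with (C * (Cnorm h * Cnorm h ^ k)); auto.
  apply Rle_trans with (C' * (Cnorm h * Cnorm h ^ k)). 
  apply Rmult_le_compat_r; nra. nra.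
Qed.

Lemma littleo_comp E k v C :
  littleo E k -> (exists r, 0 < r /\ forall h, Cnorm h < r -> Cnorm (v h) <= C * Cnorm h) ->
  littleo (fun h => E (v h)) k.
Proof.
  intros S [r [Hr H]] eps He.
  set (C' := Rabs C + 1). assert (0 < C') by (unfold C'; pose proof (Rabs_pos C); lra).
  assert (HC : C <= C') by (unfold C'; pose proof (Rle_abs C); lra).
  assert (0 < C' ^ k) by (apply pow_lt; lra).
  destruct (S (eps / C' ^ k) ltac:(apply Rdiv_lt_0_compat; lra)) as [d [Hd HE]].
  exists (Rmin r (d / C')); split. apply Rmin_pos; auto. apply Rdiv_lt_0_compat; lra.
  intros h Hl. pose proof (Rmin_l r (d/C')); pose proof (Rmin_r r (d/C')).
  specialize (H h ltac:(lra)). pose proof (Cnorm_ge0 h).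
  assert (Hv : Cnorm (v h) <= C' * Cnorm h) by nra.
  assert (C' * Cnorm h < d). { apply (Rmult_lt_reg_r (/C')). apply Rinv_0_lt_compat; lra.
    replace (C' * Cnorm h * / C') with (Cnorm h) by (field; lra). unfold Rdiv in *; lra. }
  specialize (HE (v h) ltac:(lra)).
  apply Rle_trans with (eps / C'^k * Cnorm (v h) ^ k); auto.
  apply Rle_trans with (eps / C'^k * (C' * Cnorm h) ^ k).
  apply Rmult_le_compat_l. left; apply Rdiv_lt_0_compat; lra.
  apply pow_incr; split; auto; apply Cnorm_ge0.
  rewrite Rpow_mult_distr. right; field; lra.
Qed.

Lemma littleo_of_rel (X Y : Cx -> Cx) n C :
  (exists r, 0 < r /\ forall h, Cnorm h < r -> Cnorm (Y h) <= C * Cnorm h ^ n) ->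
  (forall eps, 0 < eps -> exists r, 0 < r /\ forall h, Cnorm h < r -> Cnorm (X h) <= eps * Cnorm (Y h)) ->
  littleo X n.
Proof.
  intros [r0 [Hr0 HY]] HX eps He.
  set (C' := Rabs C + 1). assert (0 < C') by (unfold C'; pose proof (Rabs_pos C); lra).
  destruct (HX (eps / C') ltac:(apply Rdiv_lt_0_compat; lra)) as [r1 [Hr1 H1]].
  exists (Rmin r0 r1); split. apply Rmin_pos; auto.
  intros h Hh. pose proof (Rmin_l r0 r1); pose proof (Rmin_r r0 r1).
  specialize (HY h ltac:(lra)); specialize (H1 h ltac:(lra)).
  pose proof (pow_le (Cnorm h) n (Cnorm_ge0 h)).
  assert (C <= C') by (unfold C'; pose proof (Rle_abs C); lra).
  eapply Rle_trans. exact H1.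
  apply Rle_trans with (eps / C' * (C' * Cnorm h ^ n)).
  apply Rmult_le_compat_l. left; apply Rdiv_lt_0_compat; lra. nra.
  right; field; lra.
Qed.

Lemma littleo0_ball f z0 : littleo (fun h => Csub (f h) z0) 0 -> forall d, 0 < d ->
  exists r, 0 < r /\ forall h, Cnorm h < r -> ball z0 d (f h).
Proof.
  intros S d Hd. destruct (S (d/2) ltac:(lra)) as [r [Hr H]]. exists r; split; auto.
  intros h Hh. specialize (H h Hh). simpl in H. unfold ball. lra.
Qed.

Lemma littleo_pow_const K k : littleo (fun h => Cmul K (Cpow h k)) k -> K = C0.
Proof.
  intros HS. destruct (Req_dec (Cnorm K) 0) as [E|E]. apply Cnorm_eq0; auto.
  pose proof (Cnorm_ge0 K) as HK.
  destruct (HS (Cnorm K / 2) ltac:(lra)) as [d [Hd H]].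
  specialize (H (RtoC (d/2))). rewrite Cnorm_mul, Cnorm_pow, Cnorm_RtoC, Rabs_pos_eq in H by lra.
  specialize (H ltac:(lra)). assert (0 < (d/2) ^ k) by (apply pow_lt; lra). nra.
Qed.

Lemma littleo_translate0 z : littleo (fun h => Csub (Cadd z h) z) 0.
Proof.
  apply littleo_of_bigO with 1. exists 1; split; [lra|]. intros h _.
  replace (Csub (Cadd z h) z) with h by cring. simpl; lra.
Qed.

Lemma littleo_bigO_pow E K n : littleo (fun h => Csub (E h) (Cmul K (Cpow h n))) n ->
  exists r, 0 < r /\ forall h, Cnorm h < r -> Cnorm (E h) <= (Cnorm K + 1) * Cnorm h ^ n.
Proof.
  intros HE. destruct (HE 1 ltac:(lra)) as [r [Hr H]]. exists r; split; auto.
  intros h Hh. specialize (H h Hh).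
  replace (E h) with (Cadd (Csub (E h) (Cmul K (Cpow h n))) (Cmul K (Cpow h n))) by cring.
  eapply Rle_trans. apply Cnorm_triangle. rewrite Cnorm_mul, Cnorm_pow. lra.
Qed.

Lemma littleo1_bound v w B : littleo (fun h => Csub (v h) (w h)) 1 ->
  (forall h, Cnorm (w h) <= B * Cnorm h) ->
  exists r, 0 < r /\ forall h, Cnorm h < r -> Cnorm (v h) <= (1 + B) * Cnorm h.
Proof.
  intros Hvw Hw. destruct (Hvw 1 ltac:(lra)) as [r [Hr Hr']]. exists r; split; auto.
  intros h Hh. specialize (Hr' h Hh). specialize (Hw h). simpl in Hr'.
  replace (v h) with (Cadd (Csub (v h) (w h)) (w h)) by cring.
  eapply Rle_trans. apply Cnorm_triangle. lra.
Qed.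

Lemma littleo_Cpow_sub v w B k : littleo (fun h => Csub (v h) (w h)) 1 ->
  (forall h, Cnorm (w h) <= B * Cnorm h) ->
  littleo (fun h => Csub (Cpow (v h) (S k)) (Cpow (w h) (S k))) (S k).
Proof.
  intros Hvw Hw. destruct (littleo1_bound v w B Hvw Hw) as [r [Hr Hv]].
  replace (S k) with (1 + k)%nat by lia.
  apply (littleo_mul_rel _ (fun h => Csub (v h) (w h)) 1 k (INR (S k) * (1 + Rabs B) ^ k)); auto.
  exists r; split; auto. intros h Hh. pose proof (Cnorm_ge0 h). pose proof (Rle_abs B).
  eapply Rle_trans. apply (Cpow_sub_bound _ _ _ ((1 + Rabs B) * Cnorm h)).
  - specialize (Hv h Hh). nra.
  - specialize (Hw h). nra.
  - rewrite Rpow_mult_distr. right; ring.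
Qed.

Lemma littleo_linear_solve d1 D G k C : d1 <> C0 ->
  (forall eps, 0 < eps -> exists r, 0 < r /\ forall h, Cnorm h < r ->
     Cnorm (Cadd (Cmul d1 (D h)) (G h)) <= eps * Cnorm (D h)) ->
  (exists r, 0 < r /\ forall h, Cnorm h < r -> Cnorm (G h) <= C * Cnorm h ^ k) ->
  littleo (fun h => Cadd (D h) (Cmul (Cinv d1) (G h))) k.
Proof.
  intros Hd1 Key [rG [HrG HG]]. pose proof (Cnorm_pos _ Hd1) as Hn1.
  assert (HD : exists r, 0 < r /\ forall h, Cnorm h < r -> Cnorm (D h) <= (2 / Cnorm d1 * C) * Cnorm h ^ k).
  { destruct (Key (Cnorm d1 / 2) ltac:(lra)) as [r1 [Hr1 H1]].
    exists (Rmin r1 rG); split. apply Rmin_pos; auto.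
    intros h Hh. pose proof (Rmin_l r1 rG); pose proof (Rmin_r r1 rG).
    specialize (H1 h ltac:(lra)); specialize (HG h ltac:(lra)).
    assert (Cnorm d1 * Cnorm (D h) <= Cnorm (Cadd (Cmul d1 (D h)) (G h)) + Cnorm (G h)).
    { rewrite <- Cnorm_mul.
      pose proof (Cnorm_sub_triangle (Cadd (Cmul d1 (D h)) (G h)) (G h)) as T.
      replace (Csub (Cadd (Cmul d1 (D h)) (G h)) (G h)) with (Cmul d1 (D h)) in T by cring. exact T. }
    apply (Rmult_le_reg_l (Cnorm d1 / 2)). lra.
    replace (Cnorm d1 / 2 * (2 / Cnorm d1 * C * Cnorm h ^ k)) with (C * Cnorm h ^ k) by (field; lra).
    lra. }
  eapply littleo_ext; [|apply (littleo_scal (Cinv d1)), (littleo_of_rel _ D k _ HD Key)].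
  intros h. transitivity (Cadd (Cmul (Cmul (Cinv d1) d1) (D h)) (Cmul (Cinv d1) (G h))).
  - cring.
  - rewrite Cinv_l by auto. cring.
Qed.

Definition has_Cderiv (f : Cx -> Cx) (z l : Cx) : Prop :=
  littleo (fun h => Csub (Csub (f (Cadd z h)) (f z)) (Cmul l h)) 1.

Lemma Cdiv_sub_eq A h l : h <> C0 ->
  Csub (Cdiv A h) l = Cmul (Csub A (Cmul l h)) (Cinv h).
Proof.
  intros H. transitivity (Csub (Cmul A (Cinv h)) (Cmul l (Cmul h (Cinv h)))).
  rewrite Cinv_r by auto. unfold Cdiv. cring. cring.
Qed.

Lemma Cderiv_atE f z l : Cderiv_at f z l <-> has_Cderiv f z l.
Proof.
  split.
  - intros H eps Heps. destruct (H eps Heps) as [d [Hd Hh]]. exists d; split; auto.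
    intros h Hhd. destruct (Req_dec (Cnorm h) 0) as [E|E].
    + apply Cnorm_eq0 in E. subst h.
      replace (Csub (Csub (f (Cadd z C0)) (f z)) (Cmul l C0)) with C0.
      rewrite Cnorm_C0. pose proof (Cnorm_ge0 C0). simpl. lra.
      replace (Cadd z C0) with z by cring. cring.
    + assert (hn : h <> C0) by (intro; subst; apply E, Cnorm_C0).
      pose proof (Cnorm_ge0 h).
      specialize (Hh h ltac:(lra)). rewrite Cdiv_sub_eq in Hh by auto.
      rewrite Cnorm_mul, Cnorm_Cinv in Hh by auto.
      set (X := Cnorm _) in *.
      assert (0 < Cnorm h) by lra.
      assert (X <= eps * Cnorm h). {
        apply (Rmult_lt_compat_r (Cnorm h)) in Hh; auto.
        rewrite Rmult_assoc, Rinv_l in Hh by lra. lra. }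
      simpl. lra.
  - intros H eps Heps. destruct (H (eps/2) ltac:(lra)) as [d [Hd Hh]].
    exists d; split; auto. intros h [H1 H2].
    assert (hn : h <> C0) by (intro; subst; rewrite Cnorm_C0 in H1; lra).
    rewrite Cdiv_sub_eq by auto. rewrite Cnorm_mul, Cnorm_Cinv by auto.
    specialize (Hh h H2). simpl in Hh. rewrite Rmult_1_r in Hh.
    apply (Rmult_le_compat_r (/ Cnorm h)) in Hh. 2: left; apply Rinv_0_lt_compat; lra.
    rewrite Rmult_assoc, Rinv_r in Hh by lra. lra.
Qed.

Lemma Cderiv_bound f z l : has_Cderiv f z l -> exists r, 0 < r /\
  forall h, Cnorm h < r -> Cnorm (Csub (f (Cadd z h)) (f z)) <= (Cnorm l + 1) * Cnorm h.
Proof.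
  intros S. destruct (S 1 ltac:(lra)) as [d [Hd H]]. exists d; split; auto.
  intros h Hh. specialize (H h Hh). simpl in H.
  set (A := Csub (f (Cadd z h)) (f z)) in *.
  assert (A = Cadd (Csub A (Cmul l h)) (Cmul l h)) as E by cring.
  rewrite E. eapply Rle_trans. apply Cnorm_triangle. rewrite Cnorm_mul. lra.
Qed.

Lemma Cderiv_cont f z l : has_Cderiv f z l -> littleo (fun h => Csub (f (Cadd z h)) (f z)) 0.
Proof.
  intros S. apply littleo_of_bigO with (Cnorm l + 1).
  destruct (Cderiv_bound f z l S) as [r [Hr H]]. exists r; split; auto.
  intros h Hh; simpl; rewrite Rmult_1_r; auto.
Qed.

Lemma Cderiv_const c z : has_Cderiv (fun _ => c) z C0.
Proof. apply littleo_ext with (fun _ => C0). intros; cring. apply littleo_zero. Qed.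

Lemma Cderiv_id z : has_Cderiv (fun w => w) z C1.
Proof. apply littleo_ext with (fun _ => C0). intros; cring. apply littleo_zero. Qed.

Lemma Cderiv_add f g z a b : has_Cderiv f z a -> has_Cderiv g z b ->
  has_Cderiv (fun w => Cadd (f w) (g w)) z (Cadd a b).
Proof. intros S1 S2. eapply littleo_ext. 2: apply (littleo_add _ _ _ S1 S2). intros; simpl; cring. Qed.

Lemma Cderiv_sub f g z a b : has_Cderiv f z a -> has_Cderiv g z b ->
  has_Cderiv (fun w => Csub (f w) (g w)) z (Csub a b).
Proof. intros S1 S2. eapply littleo_ext. 2: apply (littleo_sub _ _ _ S1 S2). intros; simpl; cring. Qed.

Lemma Cderiv_scal c f z a : has_Cderiv f z a -> has_Cderiv (fun w => Cmul c (f w)) z (Cmul c a).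
Proof. intros S1. eapply littleo_ext. 2: apply (littleo_scal c _ _ S1). intros; simpl; cring. Qed.

Lemma Cderiv_mul f g z a b : has_Cderiv f z a -> has_Cderiv g z b ->
  has_Cderiv (fun w => Cmul (f w) (g w)) z (Cadd (Cmul a (g z)) (Cmul (f z) b)).
Proof.
  intros S1 S2.
  set (Ef := fun h => Csub (Csub (f (Cadd z h)) (f z)) (Cmul a h)).
  set (Eg := fun h => Csub (Csub (g (Cadd z h)) (g z)) (Cmul b h)).
  set (B := fun h => Csub (g (Cadd z h)) (g z)).
  apply littleo_ext with (fun h => Cadd (Cadd (Cmul (g (Cadd z h)) (Ef h)) (Cmul (Cmul a h) (B h)))
                                     (Cmul (f z) (Eg h))).
  { intros h; unfold Ef, Eg, B; cring. }
  apply littleo_add. apply littleo_add.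
  - replace 1%nat with (1 + 0)%nat by lia. apply littleo_mulO with (Cnorm (g z) + (Cnorm b + 1) * 1); auto.
    destruct (Cderiv_bound g z b S2) as [r [Hr H]]. exists (Rmin r 1); split. apply Rmin_pos; lra.
    intros h Hh. pose proof (Rmin_l r 1); pose proof (Rmin_r r 1). specialize (H h ltac:(lra)).
    simpl. rewrite Rmult_1_r.
    assert (g (Cadd z h) = Cadd (Csub (g (Cadd z h)) (g z)) (g z)) as E by cring.
    rewrite E. eapply Rle_trans. apply Cnorm_triangle. pose proof (Cnorm_ge0 b). pose proof (Cnorm_ge0 h). nra.
  - replace 1%nat with (0 + 1)%nat by lia. apply littleo_mulO with (Cnorm a).
    apply Cderiv_cont with b; auto. exists 1; split; [lra|]. intros h _. rewrite Cnorm_mul; simpl; lra.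
  - apply littleo_scal; auto.
Qed.

Lemma Cderiv_comp f g z a b : has_Cderiv g z b -> has_Cderiv f (g z) a ->
  has_Cderiv (fun w => f (g w)) z (Cmul a b).
Proof.
  intros S1 S2.
  set (k := fun h => Csub (g (Cadd z h)) (g z)).
  set (Ef := fun u => Csub (Csub (f (Cadd (g z) u)) (f (g z))) (Cmul a u)).
  set (Eg := fun h => Csub (Csub (g (Cadd z h)) (g z)) (Cmul b h)).
  apply littleo_ext with (fun h => Cadd (Ef (k h)) (Cmul a (Eg h))).
  { intros h. unfold Ef, Eg, k.
    replace (Cadd (g z) (Csub (g (Cadd z h)) (g z))) with (g (Cadd z h)) by cring. cring. }
  apply littleo_add. 2: apply littleo_scal; auto.
  apply littleo_comp with (Cnorm b + 1). exact S2. apply Cderiv_bound; auto.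
Qed.

Lemma Cinv_add_remainder w h : w <> C0 -> Cadd w h <> C0 ->
  Csub (Csub (Cinv (Cadd w h)) (Cinv w)) (Cmul (Copp (Cmul (Cinv w) (Cinv w))) h)
  = Cmul (Cmul h h) (Cmul (Cmul (Cinv w) (Cinv w)) (Cinv (Cadd w h))).
Proof.
  intros H1 H2. pose proof (Cnorm2_pos _ H1); pose proof (Cnorm2_pos _ H2).
  destruct w as [x y], h as [u v]. unfold Cnorm2 in *; simpl in *.
  apply Cx_eq; unfold Cinv, Csub, Cadd, Copp, Cmul; simpl; field; lra.
Qed.

Lemma Cderiv_Cinv w : w <> C0 -> has_Cderiv Cinv w (Copp (Cmul (Cinv w) (Cinv w))).
Proof.
  intros Hw. pose proof (Cnorm_pos w Hw).
  apply littleo_of_bigO with (2 * / (Cnorm w * Cnorm w * Cnorm w)).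
  exists (Cnorm w / 2); split; [lra|]. intros h Hh.
  assert (Hwh : Cnorm w / 2 <= Cnorm (Cadd w h)).
  { pose proof (Cnorm_rev_triangle w (Copp h)). rewrite Cnorm_opp in H0.
    replace (Csub w (Copp h)) with (Cadd w h) in H0 by cring. lra. }
  assert (Hn : Cadd w h <> C0) by (intro E; rewrite E, Cnorm_C0 in Hwh; lra).
  rewrite Cinv_add_remainder by auto. rewrite !Cnorm_mul, !Cnorm_Cinv by auto.
  simpl. rewrite Rmult_1_r. pose proof (Cnorm_ge0 h).
  assert (/ Cnorm (Cadd w h) <= 2 / Cnorm w).
  { apply (Rmult_le_reg_r (Cnorm (Cadd w h) * Cnorm w)). nra.
    replace (/ Cnorm (Cadd w h) * (Cnorm (Cadd w h) * Cnorm w)) with (Cnorm w) by (field; lra).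
    replace (2 / Cnorm w * (Cnorm (Cadd w h) * Cnorm w)) with (2 * Cnorm (Cadd w h)) by (field; lra). lra. }
  assert (0 < / Cnorm w) by (apply Rinv_0_lt_compat; lra).
  replace (2 * / (Cnorm w * Cnorm w * Cnorm w)) with (/ Cnorm w * / Cnorm w * (2 / Cnorm w)) by (field; lra).
  apply Rle_trans with (Cnorm h * Cnorm h * (/ Cnorm w * / Cnorm w * (2 / Cnorm w))).
  apply Rmult_le_compat_l. nra. apply Rmult_le_compat_l. nra. auto. right; ring.
Qed.

Lemma Cderiv_unique f z a b : has_Cderiv f z a -> has_Cderiv f z b -> a = b.
Proof.
  intros S1 S2. symmetry. apply Csub_eq0, (littleo_pow_const _ 1).
  eapply littleo_ext. 2: apply (littleo_sub _ _ _ S1 S2). intros h; simpl; cring.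
Qed.

Lemma Cderiv_local f g z l r : 0 < r -> (forall w, Cnorm (Csub w z) < r -> f w = g w) ->
  has_Cderiv f z l -> has_Cderiv g z l.
Proof.
  intros Hr H S. apply littleo_local with (2 := S). exists r; split; auto.
  intros h Hh. rewrite !H. auto.
  replace (Csub z z) with C0 by cring. rewrite Cnorm_C0; lra.
  replace (Csub (Cadd z h) z) with h by cring. auto.
Qed.

Lemma Cderiv_eq_l f z a b : has_Cderiv f z a -> a = b -> has_Cderiv f z b.
Proof. intros H ->; auto. Qed.

Lemma Cderiv_pow m z : has_Cderiv (fun w => Cpow w (S m)) z (Cmul (RtoC (INR (S m))) (Cpow z m)).
Proof.
  induction m.
  - apply Cderiv_eq_l with C1. eapply littleo_ext; [|apply (Cderiv_id z)]. intros; simpl; cring.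
    simpl; cring.
  - change (fun w => Cpow w (S (S m))) with (fun w => Cmul w (Cpow w (S m))).
    pose proof (Cderiv_mul _ _ z _ _ (Cderiv_id z) IHm).
    eapply Cderiv_eq_l. exact H.
    rewrite (S_INR (S m)). change (Cpow z (S m)) with (Cmul z (Cpow z m)). cring.
Qed.

Lemma Cderiv_shift f z u l : has_Cderiv f (Cadd z u) l -> has_Cderiv (fun v => f (Cadd z v)) u l.
Proof.
  intros H. assert (has_Cderiv (fun v => Cadd z v) u C1).
  { eapply Cderiv_eq_l. apply Cderiv_add. apply Cderiv_const. apply Cderiv_id. cring. }
  eapply Cderiv_eq_l. apply (Cderiv_comp f (fun v => Cadd z v) u l C1); auto. cring.
Qed.

Lemma Cderiv_neq0_near f z l : has_Cderiv f z l -> f z <> C0 ->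
  exists r, 0 < r /\ forall h, Cnorm h < r -> f (Cadd z h) <> C0.
Proof.
  intros H Hz. pose proof (Cnorm_pos _ Hz).
  destruct (Cderiv_cont f z l H (Cnorm (f z) / 2) ltac:(lra)) as [d [Hd Hdd]].
  exists d; split; auto. intros h Hh E. specialize (Hdd h Hh). simpl in Hdd.
  rewrite E in Hdd. replace (Csub C0 (f z)) with (Copp (f z)) in Hdd by cring.
  rewrite Cnorm_opp in Hdd. lra.
Qed.

Lemma Cderiv_peval P : forall z, exists l, has_Cderiv (peval P) z l.
Proof.
  induction P as [|b P IH]; intros z; simpl.
  - exists C0. apply Cderiv_const.
  - destruct (IH z) as [l Hl]. eexists. apply Cderiv_add. apply Cderiv_const.
    apply Cderiv_mul. apply Cderiv_id. exact Hl.
Qed.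

Lemma Cderiv_inverse f s w l a r : has_Cderiv s w l -> has_Cderiv f (s w) a -> 0 < r ->
  (forall v, ball w r v -> f (s v) = v) -> a <> C0 /\ l = Cinv a.
Proof.
  intros Hs Hf Hr Hinv.
  assert (E : Cmul a l = C1).
  { apply (Cderiv_unique (fun x => f (s x)) w); [apply Cderiv_comp; auto|].
    apply (Cderiv_local (fun x => x) _ w C1 r Hr); [|apply Cderiv_id].
    intros v Hv. symmetry. apply Hinv, Hv. }
  assert (Ha : a <> C0) by (intro Z; rewrite Z in E; apply C1_neq0; rewrite <- E; cring).
  split; auto.
  transitivity (Cmul (Cmul (Cinv a) a) l); [rewrite Cinv_l by auto; cring|].
  transitivity (Cmul (Cinv a) (Cmul a l)); [cring|]. rewrite E. cring.
Qed.

(** * Taylor expansions and jets *)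

Lemma Cderiv_re_line F z h c l :
  has_Cderiv F (Cadd z (Cmul (RtoC c) h)) l ->
  derivable_pt_lim (fun s => Cre (F (Cadd z (Cmul (RtoC s) h)))) c (Cre (Cmul l h)).
Proof.
  intros HD eps Heps.
  set (p := Cadd z (Cmul (RtoC c) h)) in *.
  pose proof (Cnorm_ge0 h) as Hh0.
  destruct (HD (eps / (2 * (Cnorm h + 1))) ltac:(apply Rdiv_lt_0_compat; lra)) as [d [Hd0 Hdd]].
  assert (Hpos : 0 < d / (Cnorm h + 1)) by (apply Rdiv_lt_0_compat; lra).
  exists (mkposreal _ Hpos). intros t Ht0 Htd. simpl in Htd.
  specialize (Hdd (Cmul (RtoC t) h)).
  rewrite Cnorm_mul, Cnorm_RtoC in Hdd.
  assert (Htd' : Rabs t * Cnorm h < d).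
  { apply Rle_lt_trans with (Rabs t * (Cnorm h + 1)). pose proof (Rabs_pos t); nra.
    apply (Rmult_lt_reg_r (/ (Cnorm h + 1))). apply Rinv_0_lt_compat; lra.
    replace (Rabs t * (Cnorm h + 1) * / (Cnorm h + 1)) with (Rabs t) by (field; lra).
    unfold Rdiv in Htd; lra. }
  specialize (Hdd Htd'). simpl in Hdd. rewrite Rmult_1_r in Hdd.
  replace (Cadd z (Cmul (RtoC (c + t)) h)) with (Cadd p (Cmul (RtoC t) h)) by (unfold p; cring).
  set (E := Csub (Csub (F (Cadd p (Cmul (RtoC t) h))) (F p)) (Cmul l (Cmul (RtoC t) h))) in *.
  assert (HE : Cre (F (Cadd p (Cmul (RtoC t) h))) - Cre (F p) = Cre E + t * Cre (Cmul l h))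
    by (unfold E; Cunf; simpl; ring).
  rewrite HE. replace ((Cre E + t * Cre (Cmul l h)) / t - Cre (Cmul l h)) with (Cre E / t) by (field; auto).
  unfold Rdiv. rewrite Rabs_mult, Rabs_inv.
  pose proof (Cre_le E). assert (0 < Rabs t) by (apply Rabs_pos_lt; auto).
  apply Rle_lt_trans with (eps / (2 * (Cnorm h + 1)) * (Rabs t * Cnorm h) * / Rabs t).
  { apply Rmult_le_compat_r. left; apply Rinv_0_lt_compat; auto. lra. }
  replace (eps / (2 * (Cnorm h + 1)) * (Rabs t * Cnorm h) * / Rabs t)
    with (eps * (Cnorm h / (2 * (Cnorm h + 1)))) by (field; lra).
  assert (Cnorm h / (2 * (Cnorm h + 1)) < 1).
  { apply (Rmult_lt_reg_r (2 * (Cnorm h + 1))). lra. unfold Rdiv. rewrite Rmult_assoc, Rinv_l by lra. lra. }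
  nra.
Qed.

Lemma mean_value_re F F' z h K :
  (forall s, 0 <= s <= 1 -> has_Cderiv F (Cadd z (Cmul (RtoC s) h)) (F' (Cadd z (Cmul (RtoC s) h)))) ->
  (forall s, 0 <= s <= 1 -> Cnorm (F' (Cadd z (Cmul (RtoC s) h))) <= K) ->
  Rabs (Cre (F (Cadd z h)) - Cre (F z)) <= K * Cnorm h.
Proof.
  intros HD HK.
  destruct (MVT_cor2 (fun s => Cre (F (Cadd z (Cmul (RtoC s) h))))
              (fun s => Cre (Cmul (F' (Cadd z (Cmul (RtoC s) h))) h)) 0 1 ltac:(lra)
              (fun c Hc => Cderiv_re_line F z h c _ (HD c Hc))) as [c [Hc Hc01]].
  replace (Cadd z (Cmul (RtoC 1) h)) with (Cadd z h) in Hc by cring.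
  replace (Cadd z (Cmul (RtoC 0) h)) with z in Hc by cring.
  rewrite Hc, Rminus_0_r, Rmult_1_r. eapply Rle_trans. apply Cre_le.
  rewrite Cnorm_mul. apply Rmult_le_compat_r. apply Cnorm_ge0. apply HK; lra.
Qed.

Lemma mean_value_bound F F' z h K :
  (forall s, 0 <= s <= 1 -> has_Cderiv F (Cadd z (Cmul (RtoC s) h)) (F' (Cadd z (Cmul (RtoC s) h)))) ->
  (forall s, 0 <= s <= 1 -> Cnorm (F' (Cadd z (Cmul (RtoC s) h))) <= K) ->
  Cnorm (Csub (F (Cadd z h)) (F z)) <= 2 * K * Cnorm h.
Proof.
  intros HD HK. set (mi := mkC 0 (-1)).
  assert (Hmi : Cnorm mi = 1).
  { unfold mi, Cnorm; simpl. replace (0 * 0 + -1 * -1) with 1 by ring. apply sqrt_1. }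
  pose proof (mean_value_re F F' z h K HD HK) as Hre.
  assert (Him := mean_value_re (fun w => Cmul mi (F w)) (fun w => Cmul mi (F' w)) z h K
    ltac:(intros; cbv beta; apply Cderiv_scal; auto)
    ltac:(intros; cbv beta; rewrite Cnorm_mul, Hmi, Rmult_1_l; auto)).
  eapply Rle_trans. apply Cnorm_le_re_im.
  replace (Cre (Csub (F (Cadd z h)) (F z))) with (Cre (F (Cadd z h)) - Cre (F z)) by (Cunf; simpl; ring).
  replace (Cim (Csub (F (Cadd z h)) (F z)))
    with (Cre (Cmul mi (F (Cadd z h))) - Cre (Cmul mi (F z))) by (unfold mi; Cunf; simpl; ring).
  lra.
Qed.

Fixpoint taylor (c : nat -> Cx) (n : nat) (h : Cx) : Cx :=
  match n with
  | O => c O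
  | S m => Cadd (taylor c m h) (Cmul (Cmul (c (S m)) (RtoC (/ INR (fact (S m))))) (Cpow h (S m)))
  end.

Lemma taylor_S c n h : taylor c (S n) h
  = Cadd (taylor c n h) (Cmul (Cmul (c (S n)) (RtoC (/ INR (fact (S n))))) (Cpow h (S n))).
Proof. reflexivity. Qed.

Lemma INR_fact_pos m : 0 < INR (fact m).
Proof. apply lt_0_INR. apply lt_O_fact. Qed.

Lemma taylor_Cderiv c n h : has_Cderiv (taylor c (S n)) h (taylor (fun i => c (S i)) n h).
Proof.
  revert h; induction n; intros h.
  - apply Cderiv_eq_l with (Cadd C0 (Cmul (Cmul (c 1%nat) (RtoC (/ INR (fact 1))))
                                          (Cmul (RtoC (INR 1)) (Cpow h 0)))).
    + apply Cderiv_add; [apply Cderiv_const | apply Cderiv_scal, (Cderiv_pow 0)].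
    + simpl. replace (/ (1)) with 1 by field. cring.
  - apply Cderiv_eq_l with (Cadd (taylor (fun i => c (S i)) n h)
        (Cmul (Cmul (c (S (S n))) (RtoC (/ INR (fact (S (S n))))))
              (Cmul (RtoC (INR (S (S n)))) (Cpow h (S n))))).
    + apply Cderiv_add; [apply IHn | apply Cderiv_scal, (Cderiv_pow (S n))].
    + rewrite taylor_S. f_equal.
      assert (E : / INR (fact (S (S n))) * INR (S (S n)) = / INR (fact (S n))).
      { change (fact (S (S n))) with (S (S n) * fact (S n))%nat. rewrite mult_INR.
        pose proof (INR_fact_pos (S n)). assert (0 < INR (S (S n))) by (apply lt_0_INR; lia).
        field. lra. }
      rewrite <- E. cring.
Qed.

Lemma taylor_0 c n : taylor c n C0 = c O.
Proof. induction n; simpl; auto. rewrite IHn. cring. Qed.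

Lemma taylor_sub a b n h : taylor (fun i => Csub (a i) (b i)) n h = Csub (taylor a n h) (taylor b n h).
Proof. induction n; simpl; auto. rewrite IHn. cring. Qed.

Lemma taylor_zero c n h : (forall i, (i <= n)%nat -> c i = C0) -> taylor c n h = C0.
Proof. induction n; intros H; simpl. apply H; lia. rewrite IHn by (intros; apply H; lia).
  rewrite (H (S n)) by lia. cring. Qed.

Lemma taylor_ext a b n h : (forall i, (i <= n)%nat -> a i = b i) -> taylor a n h = taylor b n h.
Proof. induction n; intros H; simpl. apply H; lia. rewrite IHn by (intros; apply H; lia).
  rewrite (H (S n)) by lia. auto. Qed.

Lemma taylor_single d i n h : (forall j, j <> i -> d j = C0) -> (i <= n)%nat ->
  taylor d n h = Cmul (Cmul (d i) (RtoC (/ INR (fact i)))) (Cpow h i).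
Proof.
  intros Hd. induction n; intros Hi.
  - assert (i = O) by lia; subst. simpl. replace (/ (1)) with 1 by field. cring.
  - destruct (Nat.eq_dec i (S n)).
    + subst. simpl. rewrite taylor_zero. cring. intros j Hj. apply Hd. lia.
    + simpl. rewrite IHn by lia. rewrite (Hd (S n)) by auto. cring.
Qed.

Lemma taylor_littleo_eq0 c n : littleo (taylor c n) n -> forall i, (i <= n)%nat -> c i = C0.
Proof.
  revert c; induction n; intros c HS.
  - intros i Hi. assert (i = O) by lia; subst.
    apply (littleo_pow_const (c O) 0). eapply littleo_ext; [|exact HS]. intros; simpl; cring.
  - set (T := fun h => Cmul (Cmul (c (S n)) (RtoC (/ INR (fact (S n))))) (Cpow h (S n))).
    assert (Hm : forall i, (i <= n)%nat -> c i = C0).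
    { apply IHn. apply littleo_ext with (fun h => Csub (taylor c (S n) h) (T h)).
      intros h; simpl; unfold T; cring.
      apply littleo_sub. apply littleo_pred; exact HS.
      apply littleo_of_bigO with (Cnorm (Cmul (c (S n)) (RtoC (/ INR (fact (S n)))))).
      exists 1; split; [lra|]. intros h _. unfold T. rewrite Cnorm_mul, Cnorm_pow. lra. }
    assert (K : Cmul (c (S n)) (RtoC (/ INR (fact (S n)))) = C0).
    { apply littleo_pow_const with (S n). eapply littleo_ext; [|exact HS]. intros h; simpl.
      rewrite taylor_zero by auto. cring. }
    intros i Hi. destruct (Nat.eq_dec i (S n)); [subst|apply Hm; lia].
    apply (Cmul_RtoC_eq0 _ _ (Rinv_neq_0_compat _ (not_0_INR _ (fact_neq_0 (S n)))) K).
Qed.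

Lemma taylor_littleo_unique F a b n :
  littleo (fun h => Csub (F h) (taylor a n h)) n -> littleo (fun h => Csub (F h) (taylor b n h)) n ->
  forall i, (i <= n)%nat -> a i = b i.
Proof.
  intros S1 S2 i Hi. apply Csub_eq0. revert i Hi. apply taylor_littleo_eq0.
  eapply littleo_ext; [| apply (littleo_sub _ _ _ S2 S1)].
  intros h; simpl. rewrite taylor_sub. cring.
Qed.

Lemma pow_le1_antimono x a b : 0 <= x <= 1 -> (b <= a)%nat -> x ^ a <= x ^ b.
Proof.
  intros Hx H. induction H. lra. simpl. pose proof (pow_le x m ltac:(lra)). nra.
Qed.

Lemma taylor_bound_of_low_zero c m n : (forall j, (j <= m)%nat -> c j = C0) ->
  exists K, forall h, Cnorm h <= 1 -> Cnorm (taylor c n h) <= K * Cnorm h ^ S m.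
Proof.
  intros Hc. induction n.
  - exists 0. intros h _. simpl. rewrite Hc by lia. rewrite Cnorm_C0. lra.
  - destruct IHn as [K HK].
    set (a := Cmul (c (S n)) (RtoC (/ INR (fact (S n))))).
    exists (K + Cnorm a). intros h Hh. change (taylor c (S n) h) with (Cadd (taylor c n h) (Cmul a (Cpow h (S n)))).
    eapply Rle_trans. apply Cnorm_triangle. rewrite Cnorm_mul, Cnorm_pow.
    specialize (HK h Hh). pose proof (Cnorm_ge0 h). pose proof (Cnorm_ge0 a).
    assert (Cnorm a * Cnorm h ^ S n <= Cnorm a * Cnorm h ^ S m).
    { destruct (le_lt_dec (S n) m).
      - unfold a. rewrite Hc by lia. replace (Cmul C0 (RtoC (/ INR (fact (S n))))) with C0 by cring.
        rewrite Cnorm_C0. lra.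
      - apply Rmult_le_compat_l; auto. apply pow_le1_antimono; auto. }
    simpl in *. nra.
Qed.

Lemma taylor_sub_drop e n i u : (i <= n)%nat ->
  Csub (taylor e n u) (taylor (fun j => if Nat.eq_dec j i then C0 else e j) n u)
  = Cmul (Cmul (e i) (RtoC (/ INR (fact i)))) (Cpow u i).
Proof.
  intros Hi. rewrite <- taylor_sub, (taylor_single _ i); auto.
  2: { intros j Hj. destruct (Nat.eq_dec j i); [congruence|cring]. }
  destruct (Nat.eq_dec i i); [|congruence]. f_equal. f_equal. cring.
Qed.

Lemma taylor_first_coef_eq0 E e n C i :
  littleo (fun h => Csub (E h) (taylor e n h)) n ->
  (forall d, 0 < d -> exists u, 0 < Cnorm u < d /\ Cnorm (E u) <= C * Cnorm u ^ n) ->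
  (i < n)%nat -> (forall j, (j < i)%nat -> e j = C0) -> e i = C0.
Proof.
  intros Hs Ht Hi Hlow.
  destruct (Ceq_dec (e i) C0) as [E0|E0]; auto. exfalso.
  set (e' := fun j => if Nat.eq_dec j i then C0 else e j).
  set (a := Cnorm (e i) * / INR (fact i)).
  assert (Ha : 0 < a).
  { unfold a. apply Rmult_lt_0_compat. apply Cnorm_pos; auto. apply Rinv_0_lt_compat, INR_fact_pos. }
  assert (Hsplit : forall u, Cnorm (Csub (taylor e n u) (taylor e' n u)) = a * Cnorm u ^ i).
  { intros u. unfold e'. rewrite taylor_sub_drop by lia.
    rewrite !Cnorm_mul, Cnorm_RtoC, Cnorm_pow, Rabs_pos_eq; [reflexivity|].
    left; apply Rinv_0_lt_compat, INR_fact_pos. }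
  destruct (taylor_bound_of_low_zero e' i n) as [K HK].
  { intros j Hj. unfold e'. destruct (Nat.eq_dec j i); auto. apply Hlow; lia. }
  destruct (Hs 1 ltac:(lra)) as [d1 [Hd1 Hdd1]].
  set (Q := Rabs C + 1 + Rabs K).
  assert (HQ : 0 < Q) by (unfold Q; pose proof (Rabs_pos C); pose proof (Rabs_pos K); lra).
  destruct (Ht (Rmin (Rmin d1 1) (a / (2 * Q)))) as [u [[Hu0 Hu1] HuU]].
  { apply Rmin_pos. apply Rmin_pos; lra. apply Rdiv_lt_0_compat; lra. }
  pose proof (Rmin_l (Rmin d1 1) (a / (2 * Q))). pose proof (Rmin_r (Rmin d1 1) (a / (2 * Q))).
  pose proof (Rmin_l d1 1). pose proof (Rmin_r d1 1).
  specialize (Hdd1 u ltac:(lra)). specialize (HK u ltac:(lra)). specialize (Hsplit u).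
  assert (T1 : Cnorm (Csub (taylor e n u) (taylor e' n u))
               <= Cnorm (E u) + Cnorm u ^ n + K * Cnorm u ^ S i).
  { replace (Csub (taylor e n u) (taylor e' n u))
      with (Cadd (Csub (taylor e n u) (E u)) (Cadd (E u) (Copp (taylor e' n u)))) by cring.
    eapply Rle_trans. apply Cnorm_triangle. rewrite Cnorm_sub_sym.
    eapply Rle_trans. apply Rplus_le_compat_l. apply Cnorm_triangle. rewrite Cnorm_opp. lra. }
  assert (P1 : Cnorm u ^ n <= Cnorm u ^ S i) by (apply pow_le1_antimono; [lra | lia]).
  assert (0 < Cnorm u ^ i) by (apply pow_lt; lra).
  assert (P2 : C * Cnorm u ^ n <= Rabs C * Cnorm u ^ S i).
  { pose proof (Rle_abs C). pose proof (Rabs_pos C). pose proof (pow_le (Cnorm u) n ltac:(lra)). nra. }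
  assert (P3 : K * Cnorm u ^ S i <= Rabs K * Cnorm u ^ S i).
  { pose proof (Rle_abs K). pose proof (pow_le (Cnorm u) (S i) ltac:(lra)). nra. }
  assert (HaQ : a * Cnorm u ^ i <= Q * Cnorm u ^ S i) by (unfold Q; nra).
  simpl in HaQ. assert (a <= Q * Cnorm u) by nra.
  assert (Q * Cnorm u < a / 2).
  { apply Rlt_le_trans with (Q * (a / (2 * Q))). apply Rmult_lt_compat_l; lra. right; field; lra. }
  lra.
Qed.

Lemma taylor_low_coefs_eq0 E e n C :
  littleo (fun h => Csub (E h) (taylor e n h)) n ->
  (forall d, 0 < d -> exists u, 0 < Cnorm u < d /\ Cnorm (E u) <= C * Cnorm u ^ n) ->
  forall i, (i < n)%nat -> e i = C0.
Proof.
  intros Hs Ht i. induction i as [i IH] using (well_founded_induction lt_wf). intros Hi.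
  apply (taylor_first_coef_eq0 E e n C i Hs Ht Hi). intros j Hj. apply IH; lia.
Qed.

Lemma taylor_top_coef_neq0 E e n c :
  littleo (fun h => Csub (E h) (taylor e n h)) n -> 0 < c ->
  (forall d, 0 < d -> exists u, 0 < Cnorm u < d /\ c * Cnorm u ^ n <= Cnorm (E u)) ->
  (forall i, (i < n)%nat -> e i = C0) -> e n <> C0.
Proof.
  intros Hs Hc Ht Hlow En.
  assert (Hz : forall h, taylor e n h = C0).
  { intros h. apply taylor_zero. intros i Hi. destruct (Nat.eq_dec i n); subst; auto. apply Hlow; lia. }
  destruct (Hs (c/2) ltac:(lra)) as [d [Hd Hdd]].
  destruct (Ht d Hd) as [u [[Hu0 Hu1] HuL]].
  specialize (Hdd u Hu1). rewrite Hz in Hdd. replace (Csub (E u) C0) with (E u) in Hdd by cring.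
  assert (0 < Cnorm u ^ n) by (apply pow_lt; lra). nra.
Qed.

Lemma taylor_jet_form z0 L n h : (2 <= n)%nat ->
  taylor (jet_form z0 L n) n h = Cadd (Cadd z0 h) (Cmul (Cmul L (RtoC (/ INR (fact n)))) (Cpow h n)).
Proof.
  intros Hn.
  assert (Hlin : forall m, (1 <= m)%nat -> (m < n)%nat -> taylor (jet_form z0 L n) m h = Cadd z0 h).
  { induction m as [|[|m] IHm]; intros Hm1 Hm2; [lia| |].
    - simpl. replace (/ (1)) with 1 by field. cring.
    - rewrite taylor_S, IHm by lia. unfold jet_form.
      destruct (Nat.eqb_spec (S (S m)) n); [lia|cring]. }
  destruct n as [|n']; [lia|].
  rewrite taylor_S, Hlin by lia. unfold jet_form.
  destruct n' as [|n']; [lia|]. rewrite Nat.eqb_refl. reflexivity.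
Qed.

Definition deriv_chain (g : nat -> Cx -> Cx) (n : nat) (U : Cx -> Prop) : Prop :=
  forall k w, (k < n)%nat -> U w -> has_Cderiv (g k) w (g (S k) w).

Lemma taylor_peano m : forall g z r, 0 < r -> deriv_chain g (S m) (ball z r) ->
  littleo (fun h => Csub (g O (Cadd z h)) (taylor (fun i => g i z) (S m) h)) (S m).
Proof.
  induction m; intros g z r Hr Hc.
  - assert (H := Hc O z ltac:(lia) (ball_center z r Hr)).
    eapply littleo_ext; [|exact H]. intros h. simpl.
    replace (/ (1)) with 1 by field. cring.
  - set (c := fun i => g i z).
    assert (IH := IHm (fun k => g (S k)) z r Hr ltac:(intros k w Hk Hw; apply Hc; auto; lia)).
    simpl in IH. fold c in IH.
    set (F := fun u => Csub (g O (Cadd z u)) (taylor c (S (S m)) u)).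
    set (F' := fun u => Csub (g 1%nat (Cadd z u)) (taylor (fun i => c (S i)) (S m) u)).
    assert (HD : forall u, Cnorm u < r -> has_Cderiv F u (F' u)).
    { intros u Hu. unfold F, F'. apply Cderiv_sub. apply Cderiv_shift. apply Hc. lia.
      unfold ball. replace (Csub (Cadd z u) z) with u by cring. auto. apply taylor_Cderiv. }
    intros eps He. destruct (IH (eps/2) ltac:(lra)) as [d [Hd Hdd]].
    exists (Rmin d r); split. apply Rmin_pos; auto.
    intros h Hh. pose proof (Rmin_l d r); pose proof (Rmin_r d r).
    assert (Hs : forall s, 0 <= s <= 1 -> Cnorm (Cadd C0 (Cmul (RtoC s) h)) <= Cnorm h).
    { intros s Hs. replace (Cadd C0 (Cmul (RtoC s) h)) with (Cmul (RtoC s) h) by cring.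
      rewrite Cnorm_mul, Cnorm_RtoC, Rabs_pos_eq by lra. pose proof (Cnorm_ge0 h). nra. }
    pose proof (mean_value_bound F F' C0 h (eps/2 * Cnorm h ^ S m)) as HM.
    assert (HM1 : forall s, 0 <= s <= 1 -> has_Cderiv F (Cadd C0 (Cmul (RtoC s) h)) (F' (Cadd C0 (Cmul (RtoC s) h)))).
    { intros s Hs'. apply HD. specialize (Hs s Hs'). lra. }
    assert (HM2 : forall s, 0 <= s <= 1 -> Cnorm (F' (Cadd C0 (Cmul (RtoC s) h))) <= eps / 2 * Cnorm h ^ S m).
    { intros s Hs'. specialize (Hs s Hs'). eapply Rle_trans. apply Hdd. lra.
      apply Rmult_le_compat_l. lra. apply pow_incr. split; auto. apply Cnorm_ge0. }
    specialize (HM HM1 HM2).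
    replace (Cadd C0 h) with h in HM by cring.
    assert (F C0 = C0).
    { unfold F. rewrite taylor_0. replace (Cadd z C0) with z by cring. unfold c. apply Csub_diag. }
    rewrite H1 in HM. replace (Csub (F h) C0) with (F h) in HM by cring.
    unfold F in HM. eapply Rle_trans. exact HM. right. simpl. field.
Qed.

Fixpoint Ck (k : nat) (U : Cx -> Prop) (f : Cx -> Cx) : Prop :=
  match k with
  | O => True
  | S k' => exists f', (forall w, U w -> has_Cderiv f w (f' w)) /\ Ck k' U f'
  end.

Lemma Ck_down k : forall U f, Ck (S k) U f -> Ck k U f.
Proof.
  induction k; intros U f H; simpl; auto.
  destruct H as [f' [H1 H2]]. exists f'; split; auto.
Qed.

Lemma Ck_sub_set k : forall (U V : Cx -> Prop) f, (forall w, V w -> U w) -> Ck k U f -> Ck k V f.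
Proof.
  induction k; intros U V f HUV H; simpl; auto.
  destruct H as [f' [H1 H2]]. exists f'; split; eauto.
Qed.

Lemma Ck_deriv_chain n : forall U f, Ck n U f -> exists g, g O = f /\ deriv_chain g n U.
Proof.
  induction n; intros U f H.
  - exists (fun _ => f); split; auto. intros k w Hk; lia.
  - destruct H as [f' [H1 H2]]. destruct (IHn U f' H2) as [g [Hg0 Hg]].
    exists (fun k => match k with O => f | S k' => g k' end); split; auto.
    intros k w Hk Hw. destruct k. simpl. rewrite Hg0. apply H1; auto.
    apply Hg; auto; lia.
Qed.

Lemma deriv_chain_Ck g n U : deriv_chain g n U -> forall k j, (j + k <= n)%nat -> Ck k U (g j).
Proof.
  intros H k. induction k; intros j Hjk; simpl; auto.
  exists (g (S j)); split. intros w Hw; apply H; auto; lia. apply IHk; lia.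
Qed.

Lemma Ck_local k U f g : openset U -> (forall w, U w -> f w = g w) -> Ck k U f -> Ck k U g.
Proof.
  intros HU Hfg. destruct k; simpl; auto. intros [f' [H1 H2]]. exists f'; split; auto.
  intros w Hw. destruct (HU w Hw) as [r [Hr Hv]]. apply Cderiv_local with f r; auto.
Qed.

Lemma Ck_const k U c : Ck k U (fun _ => c).
Proof.
  revert c; induction k; intros c; simpl; auto.
  exists (fun _ => C0); split; auto. intros; apply Cderiv_const.
Qed.

Lemma Ck_add k : forall U f g, Ck k U f -> Ck k U g -> Ck k U (fun w => Cadd (f w) (g w)).
Proof.
  induction k; intros U f g Hf Hg; simpl; auto.
  destruct Hf as [f' [F1 F2]], Hg as [g' [G1 G2]].
  exists (fun w => Cadd (f' w) (g' w)); split. intros; apply Cderiv_add; auto. apply IHk; auto.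
Qed.

Lemma Ck_mul k : forall U f g, Ck k U f -> Ck k U g -> Ck k U (fun w => Cmul (f w) (g w)).
Proof.
  induction k; intros U f g Hf Hg; simpl; auto.
  pose proof (Ck_down _ _ _ Hf) as Hf0. pose proof (Ck_down _ _ _ Hg) as Hg0.
  destruct Hf as [f' [F1 F2]], Hg as [g' [G1 G2]].
  exists (fun w => Cadd (Cmul (f' w) (g w)) (Cmul (f w) (g' w))); split.
  intros; apply Cderiv_mul; auto.
  apply Ck_add; apply IHk; auto.
Qed.

Lemma Ck_scal k U c f : Ck k U f -> Ck k U (fun w => Cmul c (f w)).
Proof. intros H. apply Ck_mul; auto. apply Ck_const. Qed.

Lemma Ck_comp k : forall (U V : Cx -> Prop) f g, Ck k V f -> Ck k U g -> (forall w, U w -> V (g w)) ->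
  Ck k U (fun w => f (g w)).
Proof.
  induction k; intros U V f g Hf Hg HUV; simpl; auto.
  pose proof (Ck_down _ _ _ Hg) as Hg0.
  destruct Hf as [f' [F1 F2]], Hg as [g' [G1 G2]].
  exists (fun w => Cmul (f' (g w)) (g' w)); split.
  intros w Hw. apply Cderiv_comp; auto.
  apply Ck_mul; auto. apply IHk with V; auto.
Qed.

Lemma Ck_Cinv k : Ck k (fun w => w <> C0) Cinv.
Proof.
  induction k; simpl; auto.
  exists (fun w => Cmul (Copp C1) (Cmul (Cinv w) (Cinv w))); split.
  intros w Hw. eapply Cderiv_eq_l. apply Cderiv_Cinv; auto. cring.
  apply Ck_scal. apply Ck_mul; auto.
Qed.

Definition strict_deriv (fe : Cx -> Cx) (z d1 : Cx) :=
  forall eps, 0 < eps -> exists del, 0 < del /\ forall a b, ball z del a -> ball z del b ->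
    Cnorm (Csub (Csub (fe a) (fe b)) (Cmul d1 (Csub a b))) <= eps * Cnorm (Csub a b).

Lemma strict_deriv_of_chain g r z : 0 < r -> deriv_chain g 2 (ball z r) ->
  forall eps, 0 < eps -> exists del, 0 < del /\ del <= r /\ forall a b, ball z del a -> ball z del b ->
    Cnorm (Csub (Csub (g O a) (g O b)) (Cmul (g 1%nat z) (Csub a b))) <= eps * Cnorm (Csub a b).
Proof.
  intros Hr Hc eps He.
  assert (H1 : has_Cderiv (g 1%nat) z (g 2%nat z)) by (apply Hc; auto; apply ball_center; auto).
  destruct (Cderiv_cont _ _ _ H1 (eps/2) ltac:(lra)) as [d [Hd Hdd]].
  exists (Rmin d r). split. apply Rmin_pos; auto. split. apply Rmin_r.
  intros a b Ha Hb. pose proof (Rmin_l d r); pose proof (Rmin_r d r).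
  set (F := fun w => Csub (g O w) (Cmul (g 1%nat z) w)).
  set (F' := fun w => Csub (g 1%nat w) (g 1%nat z)).
  set (p := fun s => Cadd b (Cmul (RtoC s) (Csub a b))).
  assert (Hs : forall s, 0 <= s <= 1 -> ball z (Rmin d r) (p s)) by (intros; apply ball_convex; auto).
  assert (HF : forall s, 0 <= s <= 1 -> has_Cderiv F (p s) (F' (p s))).
  { intros s Hs'. specialize (Hs s Hs'). unfold F, F'. eapply Cderiv_eq_l.
    - apply Cderiv_sub; [apply Hc; [lia | unfold ball in *; lra] | apply Cderiv_scal, Cderiv_id].
    - cring. }
  assert (HF' : forall s, 0 <= s <= 1 -> Cnorm (F' (p s)) <= eps / 2).
  { intros s Hs'. specialize (Hs s Hs'). unfold ball in Hs.
    specialize (Hdd (Csub (p s) z) ltac:(lra)). simpl in Hdd.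
    replace (Cadd z (Csub (p s) z)) with (p s) in Hdd by cring. unfold F'. lra. }
  pose proof (mean_value_bound F F' b (Csub a b) (eps/2) HF HF') as HM.
  replace (Cadd b (Csub a b)) with a in HM by cring.
  unfold F in HM. replace (Csub (Csub (g O a) (Cmul (g 1%nat z) a)) (Csub (g O b) (Cmul (g 1%nat z) b)))
    with (Csub (Csub (g O a) (g O b)) (Cmul (g 1%nat z) (Csub a b))) in HM by cring.
  lra.
Qed.

Lemma strict_deriv_rel f z d1 a b : strict_deriv f z d1 ->
  littleo (fun h => Csub (a h) z) 0 -> littleo (fun h => Csub (b h) z) 0 ->
  forall eps, 0 < eps -> exists r, 0 < r /\ forall h, Cnorm h < r ->
    Cnorm (Csub (Csub (f (a h)) (f (b h))) (Cmul d1 (Csub (a h) (b h)))) <= eps * Cnorm (Csub (a h) (b h)).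
Proof.
  intros Hst Ha Hb eps He.
  destruct (Hst eps He) as [del [Hdel Hs]].
  destruct (littleo0_ball _ _ Ha del Hdel) as [ra [Hra Hra']].
  destruct (littleo0_ball _ _ Hb del Hdel) as [rb [Hrb Hrb']].
  exists (Rmin ra rb); split. apply Rmin_pos; auto.
  intros h Hh. pose proof (Rmin_l ra rb); pose proof (Rmin_r ra rb).
  apply Hs; [apply Hra' | apply Hrb']; lra.
Qed.

Lemma has_jetE f z n d : has_jet f z n d ->
  exists r g, 0 < r /\ deriv_chain g n (ball z r) /\ (forall w, ball z r w -> g O w = f w) /\
    (forall k, (k <= n)%nat -> g k z = d k).
Proof.
  intros [r [g [[Hr [H0 H1]] H2]]]. exists r, g. repeat split; auto.
  intros k w Hk Hw. apply Cderiv_atE. apply H1; auto.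
Qed.

Lemma has_jet_taylor f z n d : has_jet f z n d -> (0 < n)%nat ->
  littleo (fun h => Csub (f (Cadd z h)) (taylor d n h)) n.
Proof.
  intros H Hn. destruct (has_jetE f z n d H) as [r [g [Hr [Hc [H0 Hv]]]]].
  destruct n as [|m]; [lia|].
  pose proof (taylor_peano m g z r Hr Hc) as P.
  apply littleo_local with (2 := P). exists r; split; auto. intros h Hh.
  rewrite H0. rewrite (taylor_ext _ d) by auto. reflexivity.
  unfold ball. replace (Csub (Cadd z h) z) with h by cring. auto.
Qed.

Lemma has_jet_deriv f z n d : has_jet f z n d -> (0 < n)%nat -> has_Cderiv f z (d 1%nat) /\ f z = d O.
Proof.
  intros H Hn. destruct (has_jetE f z n d H) as [r [g [Hr [Hc [H0 Hv]]]]].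
  split.
  - rewrite <- Hv by lia. apply (Cderiv_local (g O) f z (g 1%nat z) r Hr).
    intros w Hw; apply H0; auto. apply Hc; auto. apply ball_center; auto.
  - rewrite <- Hv by lia. symmetry; apply H0, ball_center; auto.
Qed.

Lemma has_jet_of_taylor f z n d r : 0 < r -> (0 < n)%nat -> Ck n (ball z r) f ->
  littleo (fun h => Csub (f (Cadd z h)) (taylor d n h)) n -> has_jet f z n d.
Proof.
  intros Hr Hn HC Hs. destruct (Ck_deriv_chain n _ _ HC) as [g [Hg0 Hg]].
  exists r, g. split.
  - split; auto. split. intros w _; rewrite Hg0; auto.
    intros k w Hk Hw. apply Cderiv_atE. apply Hg; auto.
  - intros k Hk. destruct n as [|m]; [lia|].
    pose proof (taylor_peano m g z r Hr Hg) as P. rewrite Hg0 in P.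
    apply (taylor_littleo_unique (fun h => f (Cadd z h)) (fun i => g i z) d (S m) P Hs k Hk).
Qed.

Lemma has_jet_Ck f z n d : has_jet f z n d -> exists r, 0 < r /\ Ck n (ball z r) f.
Proof.
  intros Hj. destruct (has_jetE _ _ _ _ Hj) as [r [g [Hr [Hc [H0 _]]]]].
  exists r; split; auto. apply (Ck_local n _ (g O) f (ball_open z r)); auto.
  apply (deriv_chain_Ck g n _ Hc n 0); lia.
Qed.

Lemma has_jet_strict_deriv f z n d : has_jet f z n d -> (2 <= n)%nat -> strict_deriv f z (d 1%nat).
Proof.
  intros Hj Hn. destruct (has_jetE _ _ _ _ Hj) as [r [g [Hr [Hc [H0 Hv]]]]].
  intros eps He.
  destruct (strict_deriv_of_chain g r z Hr ltac:(intros k w Hk Hw; apply Hc; auto; lia) eps He)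
    as [del [Hdel [Hdr Hs]]].
  exists del; split; auto. intros a b Ha Hb. specialize (Hs a b Ha Hb).
  rewrite Hv, !H0 in Hs by (unfold ball in *; lia || lra). exact Hs.
Qed.

Lemma has_jet_sub_littleo f g z n df dg : (0 < n)%nat ->
  has_jet f z n df -> has_jet g z n dg -> (forall i, (i < n)%nat -> dg i = df i) ->
  littleo (fun h => Csub (Csub (g (Cadd z h)) (f (Cadd z h)))
                         (Cmul (Cmul (Csub (dg n) (df n)) (RtoC (/ INR (fact n)))) (Cpow h n))) n.
Proof.
  intros Hn Hf Hg Hlow.
  eapply littleo_ext;
    [|apply (littleo_sub _ _ _ (has_jet_taylor _ _ _ _ Hg Hn) (has_jet_taylor _ _ _ _ Hf Hn))].
  intros h. transitivity (Csub (Csub (g (Cadd z h)) (f (Cadd z h))) (Csub (taylor dg n h) (taylor df n h))).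
  { cring. }
  rewrite <- taylor_sub. destruct n as [|n]; [lia|]. simpl taylor.
  rewrite taylor_zero; [cring|]. intros i Hi. rewrite Hlow by lia. cring.
Qed.

(** * Rational self-maps of the disc *)

Lemma Rabs_le_between x a : Rabs x <= a -> - a <= x <= a.
Proof. intros H. pose proof (Rle_abs x). pose proof (Rle_abs (-x)). rewrite Rabs_Ropp in H1. lra. Qed.

Lemma de_moivre t k : Cpow (mkC (cos t) (sin t)) k = mkC (cos (INR k * t)) (sin (INR k * t)).
Proof.
  induction k.
  - simpl. rewrite Rmult_0_l, cos_0, sin_0. reflexivity.
  - change (Cpow (mkC (cos t) (sin t)) (S k)) with (Cmul (mkC (cos t) (sin t)) (Cpow (mkC (cos t) (sin t)) k)).
    rewrite IHk. rewrite S_INR. replace ((INR k + 1) * t) with (t + INR k * t) by ring.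
    rewrite cos_plus, sin_plus. apply Cx_eq; unfold Cmul; simpl; ring.
Qed.

Lemma polar_angle x y : x * x + y * y = 1 -> exists a, - PI <= a <= PI /\ cos a = x /\ sin a = y.
Proof.
  intros H. assert (Hx : -1 <= x <= 1) by (split; nra).
  pose proof (acos_bound x). pose proof (cos_acos x Hx). pose proof (sin_acos x Hx).
  assert (E : sqrt (1 - x²) = Rabs y).
  { rewrite <- sqrt_Rsqr_abs. f_equal. unfold Rsqr. lra. }
  destruct (Rle_dec 0 y).
  - exists (acos x). split; [lra|]. split; auto. rewrite H2, E, Rabs_pos_eq; auto.
  - exists (- acos x). split; [lra|]. rewrite cos_neg, sin_neg. split; auto.
    rewrite H2, E, Rabs_left; lra.
Qed.

Lemma exists_unit_direction B k : B <> C0 -> (2 <= k)%nat ->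
  exists v, Cnorm2 v = 1 /\ 0 < Cre v /\ 0 < Cre (Cmul B (Cpow v k)).
Proof.
  intros HB Hk. pose proof (Cnorm_pos B HB) as HnB.
  pose proof (Cnorm_sq B) as HsB.
  destruct (polar_angle (Cre B / Cnorm B) (Cim B / Cnorm B)) as [a [Ha [Hc Hs]]].
  { replace (Cre B / Cnorm B * (Cre B / Cnorm B) + Cim B / Cnorm B * (Cim B / Cnorm B))
      with (Cnorm2 B / (Cnorm B * Cnorm B)) by (unfold Cnorm2; field; lra).
    rewrite <- HsB. field. lra. }
  assert (Hkr : 2 <= INR k) by (replace 2 with (INR 2) by (simpl; ring); apply le_INR; auto).
  (* [v = e^(i t)] turns the argument [a] of [B] into [a/4] in [B v^k], and [|t| <= 3 PI / 8]. *)
  set (t := - (3 * a) / (4 * INR k)).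
  exists (mkC (cos t) (sin t)). split; [|split].
  - unfold Cnorm2; simpl. rewrite Rplus_comm. apply sin2_cos2.
  - simpl. assert (Ht : -(3 * PI / 8) <= t <= 3 * PI / 8).
      { unfold t. apply Rabs_le_between. unfold Rdiv.
        rewrite Rabs_mult, Rabs_Ropp, Rabs_mult, Rabs_inv, (Rabs_pos_eq 3) by lra.
        rewrite (Rabs_pos_eq (4 * INR k)) by lra.
        assert (Rabs a <= PI) by (apply Rabs_le; lra).
        apply (Rmult_le_reg_r (4 * INR k)). lra.
        rewrite Rmult_assoc, Rinv_l by lra. pose proof PI_RGT_0. nra. }
    pose proof PI_RGT_0. apply cos_gt_0; lra.
  - rewrite de_moivre.
    assert (EB : B = mkC (Cnorm B * cos a) (Cnorm B * sin a)).
    { rewrite Hc, Hs. apply Cx_eq; simpl; field; lra. }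
    rewrite EB. unfold Cmul; simpl.
    replace (Cnorm B * cos a * cos (INR k * t) - Cnorm B * sin a * sin (INR k * t))
      with (Cnorm B * cos (a + INR k * t)) by (rewrite cos_plus; ring).
    apply Rmult_lt_0_compat; auto.
    replace (a + INR k * t) with (a / 4) by (unfold t; field; lra).
    apply cos_gt_0; pose proof PI_RGT_0; lra.
Qed.

Lemma inward_point zeta v t : Cnorm2 zeta = 1 -> Cnorm2 v = 1 -> 0 < t <= Cre v ->
  Cnorm (Cadd zeta (Cmul (RtoC t) (Copp (Cmul zeta v)))) < 1.
Proof.
  intros Hz Hv Ht. apply Cnorm2_lt1.
  replace (Cadd zeta (Cmul (RtoC t) (Copp (Cmul zeta v)))) with (Cmul zeta (Csub C1 (Cmul (RtoC t) v)))
    by cring.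
  rewrite Cnorm2_mul, Hz, Rmult_1_l. unfold Cnorm2 in *.
  unfold Csub, Cadd, Copp, Cmul, C1, RtoC; simpl. nra.
Qed.

(* Moving from [zeta] into the disc along a well-chosen direction makes the real part of
   [conj lam * (w - zeta)^k * g w] positive, which pushes [|lam + (w - zeta)^k g w|] above 1. *)
Lemma boundary_root_order_lt2 lam zeta k g :
  Cnorm2 zeta = 1 -> Cnorm2 lam = 1 -> (2 <= k)%nat ->
  littleo (fun h => Csub (g (Cadd zeta h)) (g zeta)) 0 -> g zeta <> C0 ->
  (forall w, Cnorm w < 1 -> Cnorm (Cadd lam (Cmul (Cpow (Csub w zeta) k) (g w))) < 1) -> False.
Proof.
  intros Hz Hl Hk Hg Hg0 Hself.
  set (B := Cmul (Cmul (Cconj lam) (Cpow (Copp zeta) k)) (g zeta)).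
  assert (HB : B <> C0).
  { unfold B. apply Cmul_neq0; auto. apply Cmul_neq0.
    - apply Cnorm2_1_neq0. unfold Cnorm2, Cconj in *; simpl; lra.
    - apply Cpow_neq0, Cnorm2_1_neq0. unfold Cnorm2, Copp in *; simpl; lra. }
  destruct (exists_unit_direction B k HB Hk) as [v [Hv1 [Hv2 Hv3]]].
  set (kap := Cre (Cmul B (Cpow v k))) in *.
  destruct (Hg (kap/2) ltac:(lra)) as [d [Hd Hdd]].
  set (t := Rmin (d/2) (Cre v)).
  assert (Ht : 0 < t) by (apply Rmin_pos; lra).
  assert (Ht1 : t <= d/2) by apply Rmin_l. assert (Ht2 : t <= Cre v) by apply Rmin_r.
  set (u := Cmul (RtoC t) (Copp (Cmul zeta v))).
  assert (Hu : Cnorm u = t).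
  { unfold u. rewrite Cnorm_mul, Cnorm_RtoC, Cnorm_opp, Cnorm_mul, !Cnorm2_1_Cnorm by auto.
    rewrite Rabs_pos_eq; lra. }
  set (w := Cadd zeta u).
  specialize (Hself w (inward_point zeta v t Hz Hv1 ltac:(lra))). apply Cnorm_lt1 in Hself.
  rewrite Cnorm2_add, Hl in Hself. replace (Csub w zeta) with u in Hself by (unfold w; cring).
  set (Y := Cmul (Cmul (Cconj lam) (Cmul (Cpow (Copp zeta) k) (Cpow v k))) (Csub (g w) (g zeta))).
  assert (E : Cmul (Cconj lam) (Cmul (Cpow u k) (g w))
              = Cmul (RtoC (t ^ k)) (Cadd (Cmul B (Cpow v k)) Y)).
  { unfold u. replace (Copp (Cmul zeta v)) with (Cmul (Copp zeta) v) by cring.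
    rewrite !Cpow_mul, Cpow_RtoC. unfold Y, B.
    generalize (Cpow (Copp zeta) k) (Cpow v k) (RtoC (t ^ k)). intros. cring. }
  rewrite E in Hself.
  assert (HY : Cnorm Y <= kap / 2).
  { unfold Y. rewrite !Cnorm_mul, !Cnorm_pow, Cnorm_conj, Cnorm_opp, !Cnorm2_1_Cnorm by auto.
    rewrite !pow1, !Rmult_1_l. specialize (Hdd u ltac:(lra)). simpl in Hdd. unfold w. lra. }
  pose proof (Cre_le Y). pose proof (Rle_abs (- Cre Y)). rewrite Rabs_Ropp in H0.
  replace (Cre (Cmul (RtoC (t ^ k)) (Cadd (Cmul B (Cpow v k)) Y))) with (t ^ k * (kap + Cre Y))
    in Hself by (unfold kap, RtoC, Cmul, Cadd; simpl; ring).
  pose proof (pow_lt t k Ht). pose proof (Cnorm2_ge0 (Cmul (Cpow u k) (g w))).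
  nra.
Qed.

Fixpoint padd (a b : list Cx) : list Cx :=
  match a, b with
  | nil, _ => b
  | _, nil => a
  | x :: a', y :: b' => Cadd x y :: padd a' b'
  end.

Lemma peval_padd a : forall b z, peval (padd a b) z = Cadd (peval a z) (peval b z).
Proof.
  induction a; intros b z; destruct b; simpl; try cring.
  rewrite IHa. cring.
Qed.

Definition pscale (c : Cx) (a : list Cx) := map (Cmul c) a.

Lemma peval_pscale c a z : peval (pscale c a) z = Cmul c (peval a z).
Proof. induction a; simpl. cring. rewrite IHa. cring. Qed.

Fixpoint pdiv (P : list Cx) (a : Cx) : list Cx :=
  match P with
  | nil => nil
  | b :: P' => match P' with nil => nil | _ :: _ => peval P' a :: pdiv P' a end
  end.

Lemma pdiv_spec P a z : peval P z = Cadd (peval P a) (Cmul (Csub z a) (peval (pdiv P a) z)).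
Proof.
  induction P as [|b P' IH]; simpl. cring.
  destruct P' as [|c P'']. simpl. cring.
  remember (c :: P'') as Q. simpl. rewrite IH at 1. cring.
Qed.

Lemma pdiv_len P a : length (pdiv P a) = pred (length P).
Proof. induction P as [|b P' IH]; simpl; auto. destruct P'; simpl in *; auto. Qed.

Lemma peval_root_factor N : forall P a, (length P <= N)%nat -> (exists w, peval P w <> C0) ->
  exists k R, (forall z, peval P z = Cmul (Cpow (Csub z a) k) (peval R z)) /\ peval R a <> C0.
Proof.
  induction N; intros P a HN [w Hw].
  - destruct P; simpl in HN; [|lia]. simpl in Hw. congruence.
  - destruct (Ceq_dec (peval P a) C0) as [E|E].
    + destruct P as [|b P']. simpl in Hw; congruence.
      assert (HQ : exists w, peval (pdiv (b :: P') a) w <> C0).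
      { exists w. intro Q. apply Hw. rewrite (pdiv_spec (b :: P') a w), E, Q. cring. }
      destruct (IHN (pdiv (b :: P') a) a ltac:(rewrite pdiv_len; simpl in *; lia) HQ) as [k [R [HR1 HR2]]].
      exists (S k), R. split; auto. intros z. rewrite (pdiv_spec (b :: P') a z), E, HR1. simpl. cring.
    + exists O, P. split; auto. intros; simpl; cring.
Qed.

Lemma ratfun_root_factor p q zeta :
  (forall z, Cnorm z <= 1 -> peval q z <> C0) -> Cnorm zeta <= 1 ->
  (exists w, Cnorm w <= 1 /\ ratfun p q w <> ratfun p q zeta) ->
  exists k g, (1 <= k)%nat /\ g zeta <> C0 /\ (exists l, has_Cderiv g zeta l) /\
    forall z, peval q z <> C0 ->
      ratfun p q z = Cadd (ratfun p q zeta) (Cmul (Cpow (Csub z zeta) k) (g z)).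
Proof.
  intros Hq Hz [w0 [Hw0 Hw0n]].
  set (lam := ratfun p q zeta) in *.
  assert (Hqz : peval q zeta <> C0) by auto.
  set (P := padd p (pscale (Copp lam) q)).
  assert (Hphi : forall z, peval q z <> C0 ->
            ratfun p q z = Cadd lam (Cmul (peval P z) (Cinv (peval q z)))).
  { intros z Hqz'. unfold P. rewrite peval_padd, peval_pscale. unfold ratfun, Cdiv.
    transitivity (Cadd lam (Csub (Cmul (peval p z) (Cinv (peval q z)))
                                 (Cmul lam (Cmul (peval q z) (Cinv (peval q z)))))).
    - rewrite Cinv_r by auto. cring.
    - cring. }
  assert (HPz : peval P zeta = C0).
  { rewrite <- (Cmul_inv_cancel (peval P zeta) (Cinv (peval q zeta))) by (apply Cinv_neq0; auto).
    assert (E := Hphi zeta Hqz). fold lam in E.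
    replace (Cmul (peval P zeta) (Cinv (peval q zeta))) with C0; [cring|].
    apply Cx_eq; [apply (f_equal Cre) in E | apply (f_equal Cim) in E];
      unfold Cadd in E; simpl in E; unfold C0; simpl; lra. }
  assert (Hnz : exists w, peval P w <> C0).
  { exists w0. intro E. apply Hw0n. rewrite Hphi by auto. rewrite E. cring. }
  destruct (peval_root_factor (length P) P zeta (le_n _) Hnz) as [k [Rq [HR1 HR2]]].
  exists k, (fun z => Cmul (peval Rq z) (Cinv (peval q z))). split; [|split; [|split]].
  - destruct k; [|lia]. exfalso. apply HR2. rewrite <- HPz, HR1. simpl. cring.
  - apply Cmul_neq0; auto. apply Cinv_neq0; auto.
  - destruct (Cderiv_peval Rq zeta) as [l1 H1]. destruct (Cderiv_peval q zeta) as [l2 H2].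
    eexists. apply Cderiv_mul. exact H1.
    apply (Cderiv_comp Cinv (peval q)). exact H2. apply Cderiv_Cinv; auto.
  - intros z Hqz'. rewrite Hphi, HR1 by auto. cring.
Qed.

Lemma Cderiv_simple_root_factor f g z0 l r :
  0 < r -> littleo (fun h => Csub (g (Cadd z0 h)) (g z0)) 0 ->
  (forall h, Cnorm h < r -> f (Cadd z0 h) = Cadd (f z0) (Cmul (Cpow h 1) (g (Cadd z0 h)))) ->
  has_Cderiv f z0 l -> l = g z0.
Proof.
  intros Hr Hg Hf Hl. apply (Cderiv_unique f z0); auto.
  apply littleo_local with (fun h => Cmul h (Csub (g (Cadd z0 h)) (g z0))).
  - exists r; split; auto. intros h Hh. rewrite (Hf h Hh). simpl. cring.
  - replace 1%nat with (0 + 1)%nat by lia. apply littleo_mulO with 1; auto.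
    exists 1; split; [lra|]. intros; simpl; lra.
Qed.

Lemma selfmap_deriv_neq0 p q zeta d1 :
  rational_selfmap p q -> Cnorm zeta = 1 -> Cnorm (ratfun p q zeta) = 1 ->
  (exists w, Cnorm w <= 1 /\ ratfun p q w <> ratfun p q zeta) ->
  has_Cderiv (ratfun p q) zeta d1 -> d1 <> C0.
Proof.
  intros [Hq Hself] Hz Hl Hw0 Hd.
  destruct (ratfun_root_factor p q zeta Hq ltac:(lra) Hw0) as [k [g [Hk [Hg0 [[lg Hgd] Hfac]]]]].
  destruct k as [|[|k]]; [lia| |].
  - destruct (Cderiv_peval q zeta) as [lq Hlq].
    destruct (Cderiv_neq0_near _ _ _ Hlq ltac:(apply Hq; lra)) as [rq [Hrq Hrqq]].
    rewrite (Cderiv_simple_root_factor (ratfun p q) g zeta d1 rq Hrq (Cderiv_cont _ _ _ Hgd)); auto.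
    intros h Hh. rewrite Hfac by auto. do 3 f_equal. cring.
  - exfalso. apply (boundary_root_order_lt2 (ratfun p q zeta) zeta (S (S k)) g);
      auto using Cnorm1_Cnorm2 with arith.
    + eapply Cderiv_cont; eauto.
    + intros w Hw. rewrite <- Hfac. apply Hself; auto. apply Hq; lra.
Qed.

Lemma unit_circle_near zeta : Cnorm zeta = 1 -> forall d, 0 < d ->
  exists w, Cnorm w = 1 /\ 0 < Cnorm (Csub w zeta) < d.
Proof.
  intros Hz d Hd. set (t := d / 4).
  assert (Ht : 0 < t) by (unfold t; lra).
  set (E := mkC ((1 - t * t) / (1 + t * t)) (2 * t / (1 + t * t))).
  assert (HE : Cnorm2 E = 1) by (unfold E, Cnorm2; simpl; field; nra).
  exists (Cmul zeta E). split.
  - rewrite Cnorm_mul, Hz, Cnorm2_1_Cnorm; auto. ring.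
  - replace (Csub (Cmul zeta E) zeta) with (Cmul zeta (Csub E C1)) by cring.
    rewrite Cnorm_mul, Hz, Rmult_1_l.
    assert (HE1 : Cnorm2 (Csub E C1) = 4 * (t * t) / (1 + t * t)).
    { unfold E, Cnorm2, Csub, Cadd, Copp, C1; simpl. field. nra. }
    split.
    + apply Cnorm_pos. intro X. rewrite X in HE1. unfold Cnorm2, C0 in HE1; simpl in HE1.
      assert (0 < 4 * (t * t) / (1 + t * t)) by (apply Rdiv_lt_0_compat; nra). lra.
    + apply Rle_lt_trans with (2 * t). apply Cnorm_le_sq. lra. rewrite HE1.
      apply (Rmult_le_reg_r (1 + t * t)). nra. unfold Rdiv. rewrite Rmult_assoc, Rinv_l by nra. nra.
      unfold t; lra.
Qed.

Lemma contact_deriv_neq0 p q zeta n d1 :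
  rational_selfmap p q -> order_of_contact (ratfun p q) zeta n ->
  has_Cderiv (ratfun p q) zeta d1 -> d1 <> C0.
Proof.
  intros Hrat [Hz [Hl [eps0 [m [M [He0 [Hm Hord]]]]]]]. apply selfmap_deriv_neq0; auto.
  destruct (unit_circle_near zeta Hz eps0 He0) as [w [Hw1 Hw2]].
  exists w. split; [lra|]. apply (Hord w Hw1 Hw2).
Qed.

(** * The reflected map near a point of contact *)

Lemma Cderiv_comparable f z d1 : has_Cderiv f z d1 -> d1 <> C0 ->
  exists d, 0 < d /\ forall u, Cnorm u < d ->
    Cnorm d1 / 2 * Cnorm u <= Cnorm (Csub (f (Cadd z u)) (f z)) <= 3 * Cnorm d1 / 2 * Cnorm u.
Proof.
  intros Hd Hd1. pose proof (Cnorm_pos _ Hd1) as Hn1.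
  destruct (Hd (Cnorm d1 / 2) ltac:(lra)) as [d [Hd0 Hdd]].
  exists d; split; auto. intros u Hu. specialize (Hdd u Hu). simpl in Hdd. rewrite Rmult_1_r in Hdd.
  set (D := Csub (f (Cadd z u)) (f z)) in *.
  pose proof (Cnorm_sub_triangle D (Csub D (Cmul d1 u))).
  pose proof (Cnorm_triangle (Csub D (Cmul d1 u)) (Cmul d1 u)).
  replace (Csub D (Csub D (Cmul d1 u))) with (Cmul d1 u) in * by cring.
  replace (Cadd (Csub D (Cmul d1 u)) (Cmul d1 u)) with D in * by cring.
  rewrite Cnorm_mul in *. lra.
Qed.

Lemma rho_unit w : Cnorm2 w = 1 -> rho w = w.
Proof. intros H. unfold Cnorm2 in H. unfold rho, Cinv, Cconj. destruct w as [a b]; simpl in *.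
  apply Cx_eq; simpl; replace (a * a + - b * - b) with 1 by lra; field. Qed.

Lemma reflect_map_unit phi zeta : Cnorm zeta = 1 -> Cnorm (phi zeta) = 1 ->
  reflect_map phi zeta = phi zeta.
Proof.
  intros Hz Hl. unfold reflect_map. rewrite (rho_unit zeta) by (apply Cnorm1_Cnorm2; auto).
  apply rho_unit, Cnorm1_Cnorm2, Hl.
Qed.

Lemma reflect_gap_unit_circle f w : Cnorm w = 1 -> f w <> C0 ->
  Cnorm (Csub (reflect_map f w) (f w)) * Cnorm (f w) = Rabs (1 - Cnorm (f w) ^ 2).
Proof.
  intros Hw Hfw0.
  assert (Hc : Cconj (f w) <> C0).
  { intro E. apply Hfw0. apply Cx_eq; unfold Cconj, C0 in *; injection E; simpl; intros; lra. }
  assert (HD : Cmul (Csub (reflect_map f w) (f w)) (Cconj (f w)) = RtoC (1 - Cnorm (f w) ^ 2)).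
  { unfold reflect_map. rewrite (rho_unit w) by (apply Cnorm1_Cnorm2; auto). unfold rho.
    transitivity (Csub (Cmul (Cinv (Cconj (f w))) (Cconj (f w))) (Cmul (f w) (Cconj (f w)))). cring.
    rewrite Cinv_l by auto. rewrite Cnorm_pow2. unfold Cnorm2. cring. }
  rewrite <- (Cnorm_conj (f w)) at 1. rewrite <- Cnorm_mul, HD. apply Cnorm_RtoC.
Qed.

Lemma reflect_gap_ratio f w Y n m M :
  Cnorm w = 1 -> 1 / 2 <= Cnorm (f w) -> 0 < Y -> 0 < m ->
  m <= (1 - Cnorm (f w) ^ 2) / Y ^ n <= M ->
  m * Y ^ n <= Cnorm (Csub (reflect_map f w) (f w)) <= 2 * M * Y ^ n.
Proof.
  intros Hw Hfw HY Hm [HmX HXM].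
  assert (HYn : 0 < Y ^ n) by (apply pow_lt; auto).
  set (X := 1 - Cnorm (f w) ^ 2) in *.
  assert (HX1 : m * Y ^ n <= X).
  { apply (Rmult_le_compat_r (Y ^ n)) in HmX; [|lra]. unfold Rdiv in HmX.
    rewrite Rmult_assoc, Rinv_l in HmX by lra. lra. }
  assert (HX2 : X <= M * Y ^ n).
  { apply (Rmult_le_compat_r (Y ^ n)) in HXM; [|lra]. unfold Rdiv in HXM.
    rewrite Rmult_assoc, Rinv_l in HXM by lra. lra. }
  assert (HXp : 0 < X) by nra.
  assert (Hfw1 : Cnorm (f w) < 1).
  { unfold X in HXp. pose proof (Cnorm_ge0 (f w)). simpl in HXp. nra. }
  assert (HDn := reflect_gap_unit_circle f w Hw ltac:(intro E; rewrite E, Cnorm_C0 in Hfw; lra)).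
  fold X in HDn. rewrite Rabs_pos_eq in HDn by lra.
  pose proof (Cnorm_ge0 (Csub (reflect_map f w) (f w))).
  split; nra.
Qed.

Lemma reflect_gap_bounds f zeta n d1 m M eps0 :
  Cnorm zeta = 1 -> Cnorm (f zeta) = 1 -> d1 <> C0 -> has_Cderiv f zeta d1 -> 0 < m -> 0 < eps0 ->
  (forall w, Cnorm w = 1 -> 0 < Cnorm (Csub w zeta) < eps0 ->
     f w <> f zeta /\ m <= (1 - Cnorm (f w) ^ 2) / (Cnorm (Csub (f zeta) (f w))) ^ n <= M) ->
  exists rho0 c C, 0 < rho0 /\ 0 < c /\ forall w, Cnorm w = 1 -> 0 < Cnorm (Csub w zeta) < rho0 ->
    c * Cnorm (Csub w zeta) ^ n <= Cnorm (Csub (reflect_map f w) (f w)) <= C * Cnorm (Csub w zeta) ^ n.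
Proof.
  intros Hz Hl Hd1 Hd Hm He Hord.
  pose proof (Cnorm_pos _ Hd1) as Hn1.
  destruct (Cderiv_comparable f zeta d1 Hd Hd1) as [d [Hd0 Hdd]].
  set (rho0 := Rmin (Rmin eps0 d) (/ (3 * Cnorm d1))).
  assert (Hr0 : 0 < rho0) by (apply Rmin_pos; [apply Rmin_pos; lra| apply Rinv_0_lt_compat; lra]).
  pose proof (Rmin_l (Rmin eps0 d) (/ (3 * Cnorm d1))) as R1.
  pose proof (Rmin_r (Rmin eps0 d) (/ (3 * Cnorm d1))) as R2.
  pose proof (Rmin_l eps0 d) as R3. pose proof (Rmin_r eps0 d) as R4.
  fold rho0 in R1, R2.
  exists rho0, (m * (Cnorm d1 / 2) ^ n), (2 * M * (3 * Cnorm d1 / 2) ^ n).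
  split; auto. split. { apply Rmult_lt_0_compat; auto. apply pow_lt; lra. }
  intros w Hw [Hu0 Hu1].
  set (u := Csub w zeta) in *.
  destruct (Hord w Hw ltac:(fold u; lra)) as [Hne Hratio].
  specialize (Hdd u ltac:(lra)).
  replace (Cadd zeta u) with w in Hdd by (unfold u; cring).
  rewrite Cnorm_sub_sym in Hdd. set (Y := Cnorm (Csub (f zeta) (f w))) in *.
  assert (HYp : 0 < Y).
  { apply Cnorm_pos. intro E. apply Hne. symmetry. apply Csub_eq0, E. }
  assert (Hfw : 1 / 2 <= Cnorm (f w)).
  { pose proof (Cnorm_rev_triangle (f zeta) (f w)). fold Y in H.
    assert (3 * Cnorm d1 / 2 * Cnorm u <= 1/2).
    { apply Rle_trans with (3 * Cnorm d1 / 2 * / (3 * Cnorm d1)).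
      - apply Rmult_le_compat_l; lra.
      - right; field; lra. }
    lra. }
  destruct (reflect_gap_ratio f w Y n m M Hw Hfw HYp Hm Hratio) as [Hlo Hhi].
  pose proof (Cnorm_ge0 u).
  assert (P1 : (Cnorm d1 / 2) ^ n * Cnorm u ^ n <= Y ^ n).
  { rewrite <- Rpow_mult_distr. apply pow_incr. split; [|lra]. nra. }
  assert (P2 : Y ^ n <= (3 * Cnorm d1 / 2) ^ n * Cnorm u ^ n).
  { rewrite <- Rpow_mult_distr. apply pow_incr. split; lra. }
  assert (0 <= M) by (destruct Hratio; lra).
  split; nra.
Qed.

Lemma reflect_jet_contact f zeta n d de :
  order_of_contact f zeta n -> (0 < n)%nat ->
  has_jet f zeta n d -> has_jet (reflect_map f) zeta n de -> d 1%nat <> C0 ->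
  (forall i, (i < n)%nat -> de i = d i) /\ de n <> d n.
Proof.
  intros [Hz [Hl [eps0 [m [M [He0 [Hm Hord]]]]]]] Hn Hj Hje Hd1.
  destruct (reflect_gap_bounds f zeta n (d 1%nat) m M eps0 Hz Hl Hd1
              (proj1 (has_jet_deriv _ _ _ _ Hj Hn)) Hm He0 Hord) as [rho0 [c [C [Hrho0 [Hc HB]]]]].
  set (E := fun h => Csub (reflect_map f (Cadd zeta h)) (f (Cadd zeta h))).
  set (e := fun i => Csub (de i) (d i)).
  assert (HE : littleo (fun h => Csub (E h) (taylor e n h)) n).
  { eapply littleo_ext; [|apply (littleo_sub _ _ _ (has_jet_taylor _ _ _ _ Hje Hn) (has_jet_taylor _ _ _ _ Hj Hn))].
    intros h. unfold E, e. rewrite taylor_sub. cring. }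
  assert (Hpts : forall r, 0 < r -> exists u, 0 < Cnorm u < r /\
                   c * Cnorm u ^ n <= Cnorm (E u) <= C * Cnorm u ^ n).
  { intros r Hr.
    destruct (unit_circle_near zeta Hz (Rmin r rho0) ltac:(apply Rmin_pos; lra)) as [w [Hw1 [Hw2 Hw3]]].
    pose proof (Rmin_l r rho0); pose proof (Rmin_r r rho0).
    exists (Csub w zeta). unfold E. replace (Cadd zeta (Csub w zeta)) with w by cring.
    split; [lra|]. apply HB; auto; lra. }
  assert (Hlow : forall i, (i < n)%nat -> e i = C0).
  { apply (taylor_low_coefs_eq0 E e n C HE).
    intros r Hr. destruct (Hpts r Hr) as [u [Hu [_ HuC]]]. eauto. }
  split.
  - intros i Hi. apply Csub_eq0, Hlow, Hi.
  - intros En. apply (taylor_top_coef_neq0 E e n c HE Hc); auto.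
    + intros r Hr. destruct (Hpts r Hr) as [u [Hu [Huc _]]]. eauto.
    + unfold e. rewrite En. cring.
Qed.

(** * The inverse branch *)

Lemma branch_after_map_taylor (phi phie psi : Cx -> Cx) zeta d1 K n :
  d1 <> C0 -> strict_deriv phie zeta d1 ->
  littleo (fun h => Csub (Csub (phie (Cadd zeta h)) (phi (Cadd zeta h))) (Cmul K (Cpow h n))) n ->
  littleo (fun h => Csub (psi (Cadd zeta h)) zeta) 0 ->
  (exists r, 0 < r /\ forall h, Cnorm h < r -> phie (psi (Cadd zeta h)) = phi (Cadd zeta h)) ->
  littleo (fun h => Csub (psi (Cadd zeta h))
                         (Cadd (Cadd zeta h) (Cmul (Cmul (Copp K) (Cinv d1)) (Cpow h n)))) n.
Proof.
  intros Hd1 Hst HD Hc [rid [Hrid Hid]].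
  set (Dh := fun h => Csub (phie (Cadd zeta h)) (phi (Cadd zeta h))) in HD.
  set (Del := fun h => Csub (psi (Cadd zeta h)) (Cadd zeta h)).
  assert (Key : forall eps, 0 < eps -> exists r, 0 < r /\ forall h, Cnorm h < r ->
                  Cnorm (Cadd (Cmul d1 (Del h)) (Dh h)) <= eps * Cnorm (Del h)).
  { intros eps He.
    destruct (strict_deriv_rel phie zeta d1 (fun h => psi (Cadd zeta h)) (Cadd zeta) Hst Hc
                (littleo_translate0 zeta) eps He) as [r [Hr Hs]].
    exists (Rmin r rid); split. apply Rmin_pos; auto.
    intros h Hh. pose proof (Rmin_l r rid); pose proof (Rmin_r r rid).
    specialize (Hs h ltac:(lra)). rewrite Hid in Hs by lra.
    rewrite <- Cnorm_opp. unfold Del, Dh. replace (Copp _) with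
      (Csub (Csub (phi (Cadd zeta h)) (phie (Cadd zeta h)))
            (Cmul d1 (Csub (psi (Cadd zeta h)) (Cadd zeta h)))) by cring.
    exact Hs. }
  assert (Hsol := littleo_linear_solve d1 Del Dh n _ Hd1 Key (littleo_bigO_pow _ _ _ HD)).
  eapply littleo_ext; [|apply (littleo_sub _ _ _ Hsol (littleo_scal (Cinv d1) _ _ HD))].
  intros h. unfold Del, Dh. cring.
Qed.

Lemma branch_first_order (phie sigma : Cx -> Cx) zeta lam d1 :
  d1 <> C0 -> strict_deriv phie zeta d1 ->
  littleo (fun h => Csub (sigma (Cadd lam h)) zeta) 0 -> phie zeta = lam ->
  (exists r, 0 < r /\ forall h, Cnorm h < r -> phie (sigma (Cadd lam h)) = Cadd lam h) ->
  littleo (fun h => Csub (Csub (sigma (Cadd lam h)) zeta) (Cmul (Cinv d1) h)) 1.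
Proof.
  intros Hd1 Hst Hc Hez [rid [Hrid Hid]].
  set (v := fun h => Csub (sigma (Cadd lam h)) zeta).
  assert (Key : forall eps, 0 < eps -> exists r, 0 < r /\ forall h, Cnorm h < r ->
                  Cnorm (Cadd (Cmul d1 (v h)) (Copp h)) <= eps * Cnorm (v h)).
  { intros eps He.
    destruct (strict_deriv_rel phie zeta d1 (fun h => sigma (Cadd lam h)) (fun _ => zeta) Hst Hc
                (littleo_ext (fun _ => C0) (fun _ => Csub zeta zeta) 0
                  ltac:(intros; cring) (littleo_zero 0)) eps He) as [r [Hr Hs]].
    exists (Rmin r rid); split. apply Rmin_pos; auto.
    intros h Hh. pose proof (Rmin_l r rid); pose proof (Rmin_r r rid).
    specialize (Hs h ltac:(lra)). rewrite Hid, Hez in Hs by lra.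
    rewrite <- Cnorm_opp. unfold v. replace (Copp _) with
      (Csub (Csub (Cadd lam h) lam) (Cmul d1 (Csub (sigma (Cadd lam h)) zeta))) by cring.
    exact Hs. }
  eapply littleo_ext; [|apply (littleo_linear_solve d1 v Copp 1 1 Hd1 Key)].
  - intros h. unfold v. cring.
  - exists 1; split; [lra|]. intros h _. rewrite Cnorm_opp. simpl; lra.
Qed.

Lemma map_after_branch_taylor (phi phie sigma : Cx -> Cx) zeta lam d1 K n :
  (0 < n)%nat -> d1 <> C0 -> strict_deriv phie zeta d1 ->
  littleo (fun h => Csub (Csub (phie (Cadd zeta h)) (phi (Cadd zeta h))) (Cmul K (Cpow h n))) n ->
  littleo (fun h => Csub (sigma (Cadd lam h)) zeta) 0 ->
  phie zeta = lam ->
  (exists r, 0 < r /\ forall h, Cnorm h < r -> phie (sigma (Cadd lam h)) = Cadd lam h) ->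
  littleo (fun h => Csub (phi (sigma (Cadd lam h)))
    (Cadd (Cadd lam h) (Cmul (Cmul (Copp K) (Cpow (Cinv d1) n)) (Cpow h n)))) n.
Proof.
  intros Hn Hd1 Hst HD Hc Hez Hid. destruct n as [|k]; [lia|].
  set (v := fun h => Csub (sigma (Cadd lam h)) zeta).
  set (w := fun h => Cmul (Cinv d1) h).
  assert (Svw : littleo (fun h => Csub (v h) (w h)) 1)
    by exact (branch_first_order phie sigma zeta lam d1 Hd1 Hst Hc Hez Hid).
  assert (Hw : forall h, Cnorm (w h) <= / Cnorm d1 * Cnorm h).
  { intros h. unfold w. rewrite Cnorm_mul, Cnorm_Cinv by auto. lra. }
  assert (SDc := littleo_comp _ (S k) v _ HD (littleo1_bound v w _ Svw Hw)).
  assert (Spow := littleo_Cpow_sub v w _ k Svw Hw).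
  assert (S2 := littleo_add _ _ _ (littleo_opp _ _ SDc) (littleo_opp _ _ (littleo_scal K _ _ Spow))).
  destruct Hid as [rid [Hrid Hid]].
  apply littleo_local with (2 := S2). exists rid; split; auto. intros h Hh. cbv beta.
  replace (Cadd zeta (v h)) with (sigma (Cadd lam h)) by (unfold v; cring).
  rewrite Hid by auto. unfold w. rewrite Cpow_mul. cring.
Qed.

Lemma branch_Ck f sigma lam r0 z0 rg g n rho :
  0 < r0 -> holo_on_disc sigma lam r0 -> sigma lam = z0 ->
  (forall w, ball lam r0 w -> f (sigma w) = w) ->
  (0 < n)%nat -> 0 < rg -> deriv_chain g n (ball z0 rg) -> (forall w, ball z0 rg w -> g O w = f w) ->
  0 < rho -> rho <= rg ->
  exists rs, 0 < rs /\ rs <= r0 /\ (forall w, ball lam rs w -> ball z0 rho (sigma w)) /\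
    Ck n (ball lam rs) sigma.
Proof.
  intros Hr0 Hhol Hsz Hinv Hn Hrg Hc Hg0 Hrho Hrhog.
  destruct (Hhol lam ltac:(apply ball_center; auto)) as [ls Hls]. apply Cderiv_atE in Hls.
  assert (Hsc : littleo (fun h => Csub (sigma (Cadd lam h)) z0) 0)
    by (rewrite <- Hsz; apply (Cderiv_cont _ _ _ Hls)).
  destruct (littleo0_ball _ _ Hsc rho Hrho) as [ds [Hds Hdsb]].
  exists (Rmin ds r0). pose proof (Rmin_l ds r0); pose proof (Rmin_r ds r0).
  assert (HsB : forall w, ball lam (Rmin ds r0) w -> ball z0 rho (sigma w)).
  { intros w Hw. unfold ball in Hw. specialize (Hdsb (Csub w lam) ltac:(lra)).
    replace (Cadd lam (Csub w lam)) with w in Hdsb by cring. exact Hdsb. }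
  assert (HsD : forall w, ball lam (Rmin ds r0) w ->
            g 1%nat (sigma w) <> C0 /\ has_Cderiv sigma w (Cinv (g 1%nat (sigma w)))).
  { intros w Hw.
    destruct (Hhol w ltac:(unfold ball in Hw; lra)) as [lw Hlw]. apply Cderiv_atE in Hlw.
    assert (Hsw : ball z0 rg (sigma w)) by (specialize (HsB w Hw); unfold ball in *; lra).
    destruct (ball_open z0 rg (sigma w) Hsw) as [r' [Hr' Hr'b]].
    destruct (ball_open lam r0 w ltac:(unfold ball in *; lra)) as [r'' [Hr'' Hr''b]].
    destruct (Cderiv_inverse f sigma w lw (g 1%nat (sigma w)) r'' Hlw
                (Cderiv_local (g O) f (sigma w) _ r' Hr' ltac:(auto) ltac:(apply Hc; auto; lia))
                Hr'' ltac:(auto)) as [Hnz ->].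
    auto. }
  split; [apply Rmin_pos; auto|]. split; [lra|]. split; auto.
  assert (HCs : forall k, (k <= n)%nat -> Ck k (ball lam (Rmin ds r0)) sigma).
  { induction k; intros Hk; simpl; auto.
    exists (fun w => Cinv (g 1%nat (sigma w))). split; [intros w Hw; apply HsD; auto|].
    apply (Ck_comp k _ (fun w => w <> C0) Cinv (fun w => g 1%nat (sigma w))); [apply Ck_Cinv| |].
    - apply (Ck_comp k _ (ball z0 rg) (g 1%nat) sigma).
      + apply (deriv_chain_Ck g n _ Hc k 1%nat); lia.
      + apply IHk; lia.
      + intros w Hw. specialize (HsB w Hw). unfold ball in *; lra.
    - intros w Hw; apply HsD; auto. }
  apply HCs; lia.
Qed.

Section BranchJets.

Variables (phi phie sigma : Cx -> Cx) (zeta : Cx) (n : nat) (dphi de : nat -> Cx) (r0 : R).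

Hypothesis Hn : (2 <= n)%nat.
Hypothesis Hd1 : dphi 1%nat <> C0.
Hypothesis Hjp : has_jet phi zeta n dphi.
Hypothesis Hje : has_jet phie zeta n de.
Hypothesis Hlow : forall i, (i < n)%nat -> de i = dphi i.
Hypothesis Hez : phie zeta = phi zeta.
Hypothesis Hr0 : 0 < r0.
Hypothesis Hhol : holo_on_disc sigma (phi zeta) r0.
Hypothesis Hsz : sigma (phi zeta) = zeta.
Hypothesis Hinv : forall w, Cnorm (Csub w (phi zeta)) < r0 -> phie (sigma w) = w.

Let K := Cmul (Csub (de n) (dphi n)) (RtoC (/ INR (fact n))).

Lemma reflect_sub_littleo :
  littleo (fun h => Csub (Csub (phie (Cadd zeta h)) (phi (Cadd zeta h))) (Cmul K (Cpow h n))) n.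
Proof. apply has_jet_sub_littleo; auto; lia. Qed.

Lemma reflect_strict_deriv : strict_deriv phie zeta (dphi 1%nat).
Proof. rewrite <- Hlow by lia. apply (has_jet_strict_deriv _ _ n); auto. Qed.

Lemma branch_cont : littleo (fun h => Csub (sigma (Cadd (phi zeta) h)) zeta) 0.
Proof.
  destruct (Hhol (phi zeta) ltac:(apply ball_center; auto)) as [ls Hls]. apply Cderiv_atE in Hls.
  eapply littleo_ext; [|apply (Cderiv_cont _ _ _ Hls)]. intros h. cbv beta. rewrite Hsz. reflexivity.
Qed.

Lemma branch_Ck_near rho : 0 < rho ->
  exists rs, 0 < rs /\ rs <= r0 /\ (forall w, ball (phi zeta) rs w -> ball zeta rho (sigma w)) /\
    Ck n (ball (phi zeta) rs) sigma.
Proof.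
  intros Hrho. destruct (has_jetE _ _ _ _ Hje) as [rg [g [Hrg [Hc [Hg0 _]]]]].
  destruct (branch_Ck phie sigma (phi zeta) r0 zeta rg g n (Rmin rho rg) Hr0 Hhol Hsz Hinv
              ltac:(lia) Hrg Hc Hg0 ltac:(apply Rmin_pos; auto) (Rmin_r rho rg))
    as [rs [Hrs [Hrs0 [HsB HCs]]]].
  exists rs. repeat split; auto. intros w Hw. specialize (HsB w Hw).
  pose proof (Rmin_l rho rg). unfold ball in *. lra.
Qed.

Lemma has_jet_branch_after_map :
  has_jet (fun z => sigma (phi z)) zeta n (jet_form zeta (Cdiv (Csub (dphi n) (de n)) (dphi 1%nat)) n).
Proof.
  destruct (has_jet_Ck _ _ _ _ Hjp) as [r1 [Hr1 HCp]].
  destruct (branch_Ck_near r1 Hr1) as [rs [Hrs [Hrs0 [HsB HCs]]]].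
  destruct (has_jet_deriv _ _ _ _ Hjp ltac:(lia)) as [HpD _].
  destruct (littleo0_ball _ _ (Cderiv_cont _ _ _ HpD) rs Hrs) as [dp [Hdp Hdpb]].
  set (rp := Rmin dp r1).
  assert (Hrp : 0 < rp) by (apply Rmin_pos; auto).
  pose proof (Rmin_l dp r1) as Hrp1. pose proof (Rmin_r dp r1) as Hrp2. fold rp in Hrp1, Hrp2.
  assert (HpB : forall w, ball zeta rp w -> ball (phi zeta) rs (phi w)).
  { intros w Hw. unfold ball in Hw. specialize (Hdpb (Csub w zeta) ltac:(lra)).
    replace (Cadd zeta (Csub w zeta)) with w in Hdpb by cring. exact Hdpb. }
  assert (HCpsi : Ck n (ball zeta rp) (fun z => sigma (phi z))).
  { apply (Ck_comp n _ (ball (phi zeta) rs) sigma phi HCs); auto.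
    apply (Ck_sub_set n (ball zeta r1)); auto. intros w Hw; unfold ball in *; lra. }
  assert (Hpsic : littleo (fun h => Csub (sigma (phi (Cadd zeta h))) zeta) 0).
  { eapply littleo_ext; [|apply (littleo_comp _ 0 _ _ branch_cont (Cderiv_bound _ _ _ HpD))].
    intros h. cbv beta. replace (Cadd (phi zeta) (Csub (phi (Cadd zeta h)) (phi zeta)))
      with (phi (Cadd zeta h)) by cring. reflexivity. }
  assert (Hpsiid : exists r, 0 < r /\ forall h, Cnorm h < r ->
                     phie (sigma (phi (Cadd zeta h))) = phi (Cadd zeta h)).
  { exists rp; split; auto. intros h Hh. apply Hinv.
    assert (Hb : ball zeta rp (Cadd zeta h))
      by (unfold ball; replace (Csub (Cadd zeta h) zeta) with h by cring; auto).
    specialize (HpB _ Hb). unfold ball in HpB. lra. }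
  apply (has_jet_of_taylor _ zeta n _ rp Hrp ltac:(lia) HCpsi).
  eapply littleo_ext; [|exact (branch_after_map_taylor phi phie (fun z => sigma (phi z)) zeta _ K n Hd1
                                 reflect_strict_deriv reflect_sub_littleo Hpsic Hpsiid)].
  intros h. cbv beta. rewrite taylor_jet_form by lia.
  f_equal. f_equal. unfold K, Cdiv. cring.
Qed.

Lemma has_jet_map_after_branch :
  has_jet (fun w => phi (sigma w)) (phi zeta) n
    (jet_form (phi zeta) (Cdiv (Csub (dphi n) (de n)) (Cpow (dphi 1%nat) n)) n).
Proof.
  destruct (has_jet_Ck _ _ _ _ Hjp) as [r1 [Hr1 HCp]].
  destruct (branch_Ck_near r1 Hr1) as [rs [Hrs [Hrs0 [HsB HCs]]]].
  assert (HCchi : Ck n (ball (phi zeta) rs) (fun w => phi (sigma w)))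
    by (apply (Ck_comp n _ (ball zeta r1) phi sigma); auto).
  assert (Hchiid : exists r, 0 < r /\ forall h, Cnorm h < r ->
                     phie (sigma (Cadd (phi zeta) h)) = Cadd (phi zeta) h).
  { exists r0; split; auto. intros h Hh. apply Hinv.
    replace (Csub (Cadd (phi zeta) h) (phi zeta)) with h by cring; auto. }
  apply (has_jet_of_taylor _ (phi zeta) n _ rs Hrs ltac:(lia) HCchi).
  eapply littleo_ext; [|exact (map_after_branch_taylor phi phie sigma zeta (phi zeta) _ K n ltac:(lia) Hd1
                                 reflect_strict_deriv reflect_sub_littleo branch_cont Hez Hchiid)].
  intros h. cbv beta. rewrite taylor_jet_form by lia.
  f_equal. f_equal. unfold Cdiv. rewrite Cinv_pow by auto. unfold K. cring.
Qed.

End BranchJets.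

Theorem mainTheorem9 (p q : list Cx) (zeta : Cx) (n : nat) (sigma : Cx -> Cx) :
  rational_selfmap p q ->
  (0 < n)%nat -> Nat.Even n ->
  order_of_contact (ratfun p q) zeta n ->
  (exists r, 0 < r /\ holo_on_disc sigma (ratfun p q zeta) r /\
     sigma (ratfun p q zeta) = zeta /\
     forall w, Cnorm (Csub w (ratfun p q zeta)) < r ->
       reflect_map (ratfun p q) (sigma w) = w) ->
  forall dphi dphie : nat -> Cx,
    has_jet (ratfun p q) zeta n dphi ->
    has_jet (reflect_map (ratfun p q)) zeta n dphie ->
    let lambda := ratfun p q zeta in
    let c := Csub (dphi n) (dphie n) in
    c <> C0 /\
    has_jet (fun z => sigma (ratfun p q z)) zeta n
      (jet_form zeta (Cdiv c (dphi 1%nat)) n) /\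
    has_jet (fun w => ratfun p q (sigma w)) lambda n
      (jet_form lambda (Cdiv c (Cpow (dphi 1%nat) n)) n).
Proof.
  intros Hrat Hn0 Hev Hcon [r0 [Hr0 [Hhol [Hsz Hinv]]]] dphi dphie Hjp Hje lambda c.
  assert (Hn2 : (2 <= n)%nat) by (destruct Hev as [k Hk]; lia).
  assert (Hd1 := contact_deriv_neq0 p q zeta n _ Hrat Hcon (proj1 (has_jet_deriv _ _ _ _ Hjp Hn0))).
  destruct (reflect_jet_contact _ zeta n dphi dphie Hcon Hn0 Hjp Hje Hd1) as [Hlow Hc].
  assert (Hez : reflect_map (ratfun p q) zeta = ratfun p q zeta)
    by (destruct Hcon as [Hz [Hl _]]; apply reflect_map_unit; auto).
  split; [|split].
  - intro E. apply Hc. symmetry. apply Csub_eq0, E.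
  - eapply has_jet_branch_after_map; eauto.
  - eapply has_jet_map_after_branch; eauto.
Qed.
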